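(* There exist zero mean curvature immersions (ZMC-immersions) satisfying each of the following three conditions, respectively: (i) ZMC-surfaces in $\mathcal{Z}^0_{I}$ without space-like part; (ii) ZMC-surfaces in $\mathcal{Z}^0_{I}$ without time-like part; (iii) ZMC-surfaces in $\mathcal{Z}^0_{I\!I}$ which change causal type.
   Context: Let $\boldsymbol{R}^3_1$ be Lorentz-Minkowski 3-space with coordinates $(t,x,y)$ and inner product of signature $(-++)$. Consider germs of real analytic immersions $F(x,y)=(f(x,y),x,y)$ near the origin $o=(0,0)$ with $f(0,0)=f_x(0,0)=0$, $f_y(0,0)=1$ (so $o$ is a light-like point). Set $B_F:=1-f_x^2-f_y^2$ and $A_F:=(1-f_x^2)f_{yy}+2f_xf_yf_{xy}+(1-f_y^2)f_{xx}$; a point is space-like if $B_F>0$ and time-like if $B_F<0$, and the set where $B_F\neq 0$ is assumed open and dense. $\mathcal{Z}^\omega$ denotes the set of such real analytic germs with $A_F\equiv 0$ (zero mean curvature), and $\mathcal{Z}^\omega_b$ the subset with $\nabla B_F(0,0)=\mathbf{0}$ (degenerate light-like point). For $F\in\mathcal{Z}^\omega_b$ one can write $f(x,y)=y+\frac{\alpha_F(y)}{2}x^2+\frac{\beta_F(y)}{3}x^3+h(x,y)x^4$ with real analytic $\alpha_F,\beta_F,h$, and there is a constant $\mu_F$ (the characteristic) with $\alpha_F'+\alpha_F^2+\mu_F=0$. The class $\mathcal{Z}^0_{I}$ consists of $F\in\mathcal{Z}^\omega_b$ with $\mu_F=0$ and $\alpha_F\equiv 0$; the class $\mathcal{Z}^0_{I\!I}$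 consists of $F\in\mathcal{Z}^\omega_b$ with $\mu_F=0$ and $\alpha_F=1/(y+c)$ for some constant $c\neq 0$. A surface changes causal type if it has both space-like and time-like points near $o$ (one side of the light-like line is space-like and the other time-like). *)

From Stdlib Require Import Reals.
From Coquelicot Require Import Coquelicot.
Open Scope R_scope.

Definition box (r x y : R) : Prop := Rabs x < r /\ Rabs y < r.

Definition analytic0 (f : R -> R -> R) : Prop :=
  exists r : R, 0 < r /\ exists a : nat -> nat -> R,
    (forall i, ex_series (fun j => Rabs (a i j) * r ^ (i + j))) /\
    ex_series (fun i => Series (fun j => Rabs (a i j) * r ^ (i + j))) /\
    forall x y, box r x y ->
      is_series (fun i => Series (fun j => a i j * x ^ i * y ^ j)) (f x y).

Definition analytic1 (g : R -> R) : Prop := analytic0 (fun _ y => g y).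

Definition Dx (f : R -> R -> R) (x y : R) : R := Derive (fun t => f t y) x.
Definition Dy (f : R -> R -> R) (x y : R) : R := Derive (fun t => f x t) y.

(* B_F and A_F for F(x,y) = (f(x,y), x, y). *)
Definition BF (f : R -> R -> R) (x y : R) : R :=
  1 - (Dx f x y) ^ 2 - (Dy f x y) ^ 2.

Definition AF (f : R -> R -> R) (x y : R) : R :=
  (1 - (Dx f x y) ^ 2) * Dy (Dy f) x y
  + 2 * Dx f x y * Dy f x y * Dx (Dy f) x y
  + (1 - (Dy f x y) ^ 2) * Dx (Dx f) x y.

(* o is a light-like point with the normalization of the paper. *)
Definition normalized (f : R -> R -> R) : Prop :=
  f 0 0 = 0 /\ Dx f 0 0 = 0 /\ Dy f 0 0 = 1.

(* The set {B_F <> 0} is dense near o (openness is automatic by continuity). *)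
Definition nonlightlike_dense (f : R -> R -> R) : Prop :=
  exists r : R, 0 < r /\
    forall x y, box r x y -> forall eps, 0 < eps ->
      exists x' y', box r x' y' /\ Rabs (x' - x) < eps /\
                    Rabs (y' - y) < eps /\ BF f x' y' <> 0.

Definition Zomega (f : R -> R -> R) : Prop :=
  analytic0 f /\ normalized f /\ nonlightlike_dense f /\
  exists r : R, 0 < r /\ forall x y, box r x y -> AF f x y = 0.

Definition Zomega_b (f : R -> R -> R) : Prop :=
  Zomega f /\ Dx (BF f) 0 0 = 0 /\ Dy (BF f) 0 0 = 0.

Definition expansion (f : R -> R -> R) (alpha beta : R -> R) (h : R -> R -> R)
  : Prop :=
  analytic1 alpha /\ analytic1 beta /\ analytic0 h /\
  exists r : R, 0 < r /\ forall x y, box r x y ->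
    f x y = y + alpha y / 2 * x ^ 2 + beta y / 3 * x ^ 3 + h x y * x ^ 4.

Definition characteristic (alpha : R -> R) (mu : R) : Prop :=
  exists r : R, 0 < r /\ forall y, Rabs y < r ->
    Derive alpha y + (alpha y) ^ 2 + mu = 0.

Definition Z0_I (f : R -> R -> R) : Prop :=
  Zomega_b f /\
  exists alpha beta h, expansion f alpha beta h /\ characteristic alpha 0 /\
    exists r : R, 0 < r /\ forall y, Rabs y < r -> alpha y = 0.

Definition Z0_II (f : R -> R -> R) : Prop :=
  Zomega_b f /\
  exists alpha beta h, expansion f alpha beta h /\ characteristic alpha 0 /\
    exists c : R, c <> 0 /\
    exists r : R, 0 < r /\ forall y, Rabs y < r -> alpha y = 1 / (y + c).

Definition no_spacelike_part (f : R -> R -> R) : Prop :=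
  exists r : R, 0 < r /\ forall x y, box r x y -> BF f x y <= 0.

Definition no_timelike_part (f : R -> R -> R) : Prop :=
  exists r : R, 0 < r /\ forall x y, box r x y -> 0 <= BF f x y.

Definition changes_causal_type (f : R -> R -> R) : Prop :=
  forall eps : R, 0 < eps ->
    (exists x y, box eps x y /\ 0 < BF f x y) /\
    (exists x y, box eps x y /\ BF f x y < 0).

(* In the null coordinates u = t - y, v = t + y the three surfaces are level
   sets P(x, y, t) = 0 of polynomials:
   (i)   u = x^3 / 3, where B_F = - x^4;
   (ii)  9 v^3 u^2 + (18 x^2 v^2 - 3) u + 16 x^6 v^3 - 3 x^4 v = 0, the
         self-similar solution u = x^3 G(x v), where B_F P_t^2 = x^4 (36 + o(1));
   (iii) (u - x^3 / 3) (v + 2) = x^2, where B_F P_t^2 = - x^3 (v + 2) (4 + x (v + 2))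
         changes sign with x.
   Each level set has zero mean curvature because the mean curvature numerator
   of P is a multiple of P, and B_F = O(x^2) makes the light-like point at the
   origin degenerate.  The graphs t = f(x, y) are real analytic: writing
   f = y + alpha x^2 / 2 + beta x^3 / 3 + x^4 h turns P = 0 into a fixed-point
   equation h = T(x, y, h) whose Taylor coefficients are determined order by
   order, and a majorant of T bounds the resulting double power series. *)

From Stdlib Require Import Reals Lra Lia Psatz FunctionalExtensionality.
From Coquelicot Require Import Coquelicot.
Open Scope R_scope.

(** * Series *)

Lemma is_series_finite (u : nat -> R) (N : nat) :
  (forall n, (N < n)%nat -> u n = 0) -> is_series u (sum_f_R0 u N).
Proof.
  intros Hu. apply is_series_Reals. intros eps Heps. exists N. intros n Hn.
  replace (sum_f_R0 u n) with (sum_f_R0 u N).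
  - unfold R_dist. rewrite Rminus_diag, Rabs_R0. exact Heps.
  - induction Hn as [|n Hn IH]; [reflexivity|]. simpl. rewrite <- IH, Hu by lia. ring.
Qed.

(* [ex_series_le] at the concrete type [R], where unification of the generic
   statement fails. *)
Lemma ex_series_le_R (a b : nat -> R) :
  (forall n, Rabs (a n) <= b n) -> ex_series b -> ex_series a.
Proof. exact (ex_series_le a b). Qed.

Lemma Series_zero (u : nat -> R) : (forall n, u n = 0) -> Series u = 0.
Proof.
  intros Hu. apply is_series_unique.
  replace 0 with (sum_f_R0 u 0) by (simpl; apply Hu).
  apply is_series_finite. intros n _. apply Hu.
Qed.

Lemma Series_nonneg (u : nat -> R) : (forall n, 0 <= u n) -> ex_series u -> 0 <= Series u.
Proof.
  intros Hu Hex. rewrite <- (Series_zero (fun _ => 0)) by reflexivity.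
  apply Series_le; [|exact Hex]. intros n. split; [lra|apply Hu].
Qed.

Lemma Series_le_Series (a b : nat -> R) :
  (forall n, a n <= b n) -> ex_series a -> ex_series b -> Series a <= Series b.
Proof.
  intros Hab Ha Hb. cut (0 <= Series b - Series a); [lra|].
  rewrite <- Series_minus by assumption.
  apply Series_nonneg; [intros n; specialize (Hab n); lra|].
  exact (ex_series_minus b a Hb Ha).
Qed.

Lemma sum_f_R0_le_Series (u : nat -> R) (n : nat) :
  (forall k, 0 <= u k) -> ex_series u -> sum_f_R0 u n <= Series u.
Proof.
  intros Hu Hex. apply Series_correct, is_series_Reals in Hex. now apply sum_incr.
Qed.

Lemma sum_f_R0_le_mono (u : nat -> R) (n K : nat) :
  (forall k, 0 <= u k) -> (n <= K)%nat -> sum_f_R0 u n <= sum_f_R0 u K.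
Proof.
  intros Hu Hn. induction Hn as [|K Hn IH]; [lra|]. simpl. specialize (Hu (S K)). lra.
Qed.

Lemma term_le_sum_f_R0 (u : nat -> R) (n K : nat) :
  (forall k, 0 <= u k) -> (n <= K)%nat -> u n <= sum_f_R0 u K.
Proof.
  intros Hu Hn. eapply Rle_trans; [|exact (sum_f_R0_le_mono u n K Hu Hn)].
  destruct n as [|n]; simpl; [lra|]. pose proof (cond_pos_sum u n Hu). lra.
Qed.

Lemma term_le_Series (u : nat -> R) (n : nat) :
  (forall k, 0 <= u k) -> ex_series u -> u n <= Series u.
Proof.
  intros Hu Hex. eapply Rle_trans; [|exact (sum_f_R0_le_Series u n Hu Hex)].
  now apply term_le_sum_f_R0.
Qed.

Lemma Rabs_Series_tail_le (a : nat -> R) (J : nat) : ex_series (fun j => Rabs (a j)) ->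
  Rabs (Series a - sum_f_R0 a J) <= Series (fun j => Rabs (a j)) - sum_f_R0 (fun j => Rabs (a j)) J.
Proof.
  intros Ha. pose proof (ex_series_Rabs _ Ha) as Ha'.
  rewrite (Series_incr_n a (S J)), (Series_incr_n (fun j => Rabs (a j)) (S J)) by (auto; lia).
  simpl pred. unfold Rminus. rewrite !Rplus_assoc, !(Rplus_comm (Series _)), <- !Rplus_assoc, !Rplus_opp_r, !Rplus_0_l.
  apply Series_Rabs. apply (ex_series_incr_n (fun j => Rabs (a j)) (S J)). exact Ha.
Qed.

Lemma ex_series_of_bounded_sums (u : nat -> R) (M : R) :
  (forall n, 0 <= u n) -> (forall n, sum_f_R0 u n <= M) -> ex_series u.
Proof.
  intros Hu HM. destruct (growing_cv (sum_f_R0 u)) as [l Hl].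
  - intros n. simpl. specialize (Hu (S n)). lra.
  - exists M. intros x [n ->]. apply HM.
  - exists l. now apply is_series_Reals.
Qed.

Lemma Series_le_of_bounded_sums (u : nat -> R) (M : R) :
  (forall n, 0 <= u n) -> (forall n, sum_f_R0 u n <= M) -> Series u <= M.
Proof.
  intros Hu HM. pose proof (ex_series_of_bounded_sums u M Hu HM) as Hex.
  apply Series_correct, is_series_Reals in Hex.
  apply Rnot_lt_le. intros Hlt.
  destruct (Hex (Series u - M)) as [N HN]; [lra|].
  specialize (HN N (le_n N)). specialize (HM N).
  unfold R_dist in HN. rewrite Rabs_left1 in HN; lra.
Qed.

Lemma is_series_sum_f_R0 (u : nat -> nat -> R) (l : nat -> R) (N : nat) :
  (forall k, (k <= N)%nat -> is_series (u k) (l k)) ->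
  is_series (fun j => sum_f_R0 (fun k => u k j) N) (sum_f_R0 l N).
Proof.
  induction N as [|N IH]; intros Hu; simpl.
  - apply Hu. lia.
  - apply (is_series_plus (fun j => sum_f_R0 (fun k => u k j) N) (u (S N))).
    + apply IH. intros k Hk. apply Hu. lia.
    + apply Hu. lia.
Qed.

Lemma sum_f_R0_swap (u : nat -> nat -> R) (I J : nat) :
  sum_f_R0 (fun j => sum_f_R0 (fun i => u i j) I) J =
  sum_f_R0 (fun i => sum_f_R0 (fun j => u i j) J) I.
Proof. induction J as [|J IH]; simpl; [reflexivity|]. now rewrite IH, <- sum_plus. Qed.

Lemma sum_f_R0_zero (u : nat -> R) (N : nat) :
  (forall n, (n <= N)%nat -> u n = 0) -> sum_f_R0 u N = 0.
Proof.
  induction N as [|N IH]; intros Hu; simpl; [apply Hu; lia|].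
  rewrite IH, Hu; [ring|lia|]. intros n Hn. apply Hu. lia.
Qed.

Lemma pow_Rabs_le (x r : R) (n : nat) : Rabs x <= r -> Rabs (x ^ n) <= r ^ n.
Proof. intros H. rewrite <- RPow_abs. apply pow_incr. split; [apply Rabs_pos|exact H]. Qed.

(** * Double power series *)

Definition dseq := nat -> nat -> R.

Definition DPSeries (a : dseq) (x y : R) : R :=
  Series (fun i => Series (fun j => a i j * x ^ i * y ^ j)).

Definition dnorm (a : dseq) (r : R) : R :=
  Series (fun i => Series (fun j => Rabs (a i j) * r ^ (i + j))).

Definition abs_summable (a : dseq) (r : R) : Prop :=
  (forall i, ex_series (fun j => Rabs (a i j) * r ^ (i + j))) /\
  ex_series (fun i => Series (fun j => Rabs (a i j) * r ^ (i + j))).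

Definition has_dpseries (rho : R) (a : dseq) (F : R -> R -> R) : Prop :=
  (forall r, 0 <= r < rho -> abs_summable a r) /\
  (forall x y, box rho x y -> F x y = DPSeries a x y).

Lemma dterm_le (c x y r : R) (i j : nat) : Rabs x <= r -> Rabs y <= r ->
  Rabs (c * x ^ i * y ^ j) <= Rabs c * r ^ (i + j).
Proof.
  intros Hx Hy. rewrite !Rabs_mult, pow_add, <- Rmult_assoc.
  pose proof (pow_Rabs_le x r i Hx). pose proof (pow_Rabs_le y r j Hy).
  apply Rmult_le_compat; try apply Rmult_le_compat_l; auto using Rabs_pos, Rmult_le_pos.
Qed.

Section AbsSummable.

Variables (a : dseq) (r : R).
Hypothesis Ha : abs_summable a r.

Lemma ex_series_row_abs (x y : R) (i : nat) : Rabs x <= r -> Rabs y <= r ->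
  ex_series (fun j => Rabs (a i j * x ^ i * y ^ j)).
Proof.
  intros Hx Hy. apply (ex_series_le_R _ (fun j => Rabs (a i j) * r ^ (i + j))); [|apply Ha].
  intros j. rewrite Rabs_Rabsolu. now apply dterm_le.
Qed.

Lemma Rabs_Series_row_le (x y : R) (i : nat) : Rabs x <= r -> Rabs y <= r ->
  Rabs (Series (fun j => a i j * x ^ i * y ^ j)) <= Series (fun j => Rabs (a i j) * r ^ (i + j)).
Proof.
  intros Hx Hy. eapply Rle_trans; [apply Series_Rabs, ex_series_row_abs; assumption|].
  apply Series_le_Series; [intros j; now apply dterm_le| |apply Ha].
  now apply ex_series_row_abs.
Qed.

Lemma ex_series_Series_row_abs (x y : R) : Rabs x <= r -> Rabs y <= r ->
  ex_series (fun i => Rabs (Series (fun j => a i j * x ^ i * y ^ j))).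
Proof.
  intros Hx Hy. apply (ex_series_le_R _ (fun i => Series (fun j => Rabs (a i j) * r ^ (i + j)))); [|apply Ha].
  intros i. rewrite Rabs_Rabsolu. now apply Rabs_Series_row_le.
Qed.

Lemma is_series_DPSeries (x y : R) : Rabs x <= r -> Rabs y <= r ->
  is_series (fun i => Series (fun j => a i j * x ^ i * y ^ j)) (DPSeries a x y).
Proof.
  intros Hx Hy. apply Series_correct, ex_series_Rabs. now apply ex_series_Series_row_abs.
Qed.

Lemma Rabs_DPSeries_le (x y : R) : Rabs x <= r -> Rabs y <= r ->
  Rabs (DPSeries a x y) <= dnorm a r.
Proof.
  intros Hx Hy. eapply Rle_trans; [apply Series_Rabs, ex_series_Series_row_abs; assumption|].
  apply Series_le_Series; [intros i; now apply Rabs_Series_row_le| |apply Ha].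
  now apply ex_series_Series_row_abs.
Qed.

Hypothesis Hr : 0 < r.

Lemma ex_series_row_abs_pow (i : nat) : ex_series (fun j => Rabs (a i j) * r ^ j).
Proof.
  apply (ex_series_ext (fun j => / r ^ i * (Rabs (a i j) * r ^ (i + j)))).
  - intros j. simpl. rewrite pow_add. field. apply pow_nonzero. lra.
  - apply (ex_series_scal_l (/ r ^ i) (fun j => Rabs (a i j) * r ^ (i + j))), Ha.
Qed.

Lemma ex_series_row (y : R) (i : nat) : Rabs y <= r -> ex_series (fun j => a i j * y ^ j).
Proof.
  intros Hy. refine (ex_series_le_R _ _ _ (ex_series_row_abs_pow i)). intros j.
  rewrite Rabs_mult. apply Rmult_le_compat_l; [apply Rabs_pos|now apply pow_Rabs_le].
Qed.

Lemma CV_radius_row_ge (i : nat) : Rbar_le r (CV_radius (a i)).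
Proof.
  apply CV_radius_bounded. exists (Series (fun j => Rabs (a i j) * r ^ j)). intros n.
  rewrite Rabs_mult, (Rabs_pos_eq (r ^ n)) by (apply pow_le; lra).
  apply (term_le_Series (fun j => Rabs (a i j) * r ^ j)); [|apply ex_series_row_abs_pow].
  intros k. apply Rmult_le_pos; [apply Rabs_pos|apply pow_le; lra].
Qed.

Lemma CV_radius_rows_ge (y : R) : Rabs y <= r ->
  Rbar_le r (CV_radius (fun i => Series (fun j => a i j * y ^ j))).
Proof.
  intros Hy. apply CV_radius_bounded. exists (dnorm a r). intros i.
  replace (Series (fun j => a i j * y ^ j) * r ^ i) with (Series (fun j => a i j * r ^ i * y ^ j))
    by (rewrite <- Series_scal_r; apply Series_ext; intros j; ring).
  eapply Rle_trans; [apply Rabs_Series_row_le; [rewrite Rabs_pos_eq|]; lra|].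
  apply (term_le_Series (fun i => Series (fun j => Rabs (a i j) * r ^ (i + j)))); [|apply Ha].
  intros k. apply Series_nonneg; [|apply Ha].
  intros j. apply Rmult_le_pos; [apply Rabs_pos|apply pow_le; lra].
Qed.

End AbsSummable.

Lemma DPSeries_PSeries_x (a : dseq) (x y : R) :
  DPSeries a x y = PSeries (fun i => Series (fun j => a i j * y ^ j)) x.
Proof.
  unfold DPSeries, PSeries. apply Series_ext. intros i.
  rewrite <- Series_scal_r. apply Series_ext. intros j. ring.
Qed.

Lemma abs_summable_radius_le (a : dseq) (r r' : R) : 0 <= r' <= r -> abs_summable a r -> abs_summable a r'.
Proof.
  intros Hr [Hrow Hsum].
  assert (Hle : forall i j, Rabs (a i j) * r' ^ (i + j) <= Rabs (a i j) * r ^ (i + j)).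
  { intros i j. apply Rmult_le_compat_l; [apply Rabs_pos|apply pow_incr; lra]. }
  assert (Hnn : forall i j, 0 <= Rabs (a i j) * r' ^ (i + j)).
  { intros i j. apply Rmult_le_pos; [apply Rabs_pos|apply pow_le; lra]. }
  assert (Hrow' : forall i, ex_series (fun j => Rabs (a i j) * r' ^ (i + j))).
  { intros i. refine (ex_series_le_R _ _ _ (Hrow i)). intros j. rewrite Rabs_pos_eq by apply Hnn. apply Hle. }
  split; [exact Hrow'|].
  refine (ex_series_le_R _ _ _ Hsum). intros i.
  rewrite Rabs_pos_eq by (apply Series_nonneg; auto).
  apply Series_le; [|apply Hrow]. intros j. auto.
Qed.

Definition is_DPSeries (a : dseq) (x y l : R) : Prop :=
  (forall i, ex_series (fun j => a i j * x ^ i * y ^ j)) /\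
  is_series (fun i => Series (fun j => a i j * x ^ i * y ^ j)) l.

Lemma abs_summable_is_DPSeries (a : dseq) (r x y : R) : abs_summable a r ->
  Rabs x <= r -> Rabs y <= r -> is_DPSeries a x y (DPSeries a x y).
Proof.
  intros Ha Hx Hy. split.
  - intros i. now apply ex_series_Rabs, (ex_series_row_abs a r).
  - now apply (is_series_DPSeries a r).
Qed.

Definition dconv (a b : dseq) : dseq := fun i j =>
  sum_f_R0 (fun k => sum_f_R0 (fun l => a k l * b (i - k)%nat (j - l)%nat) j) i.

Lemma is_DPSeries_dconv (a b : dseq) (r x y : R) : abs_summable a r -> abs_summable b r ->
  Rabs x < r -> Rabs y < r -> is_DPSeries (dconv a b) x y (DPSeries a x y * DPSeries b x y).
Proof.
  intros Ha Hb Hx Hy.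
  assert (Hr : 0 < r) by (pose proof (Rabs_pos x); lra).
  set (A := fun i => Series (fun j => a i j * y ^ j)).
  set (B := fun i => Series (fun j => b i j * y ^ j)).
  assert (HA : Rbar_lt (Rabs x) (CV_radius A))
    by (apply (Rbar_lt_le_trans _ r); [simpl; lra|]; apply (CV_radius_rows_ge a r); auto; lra).
  assert (HB : Rbar_lt (Rabs x) (CV_radius B))
    by (apply (Rbar_lt_le_trans _ r); [simpl; lra|]; apply (CV_radius_rows_ge b r); auto; lra).
  assert (Hrow : forall i, is_series (fun j => dconv a b i j * y ^ j) (PS_mult A B i)).
  { intros i. unfold dconv.
    apply (is_series_ext (fun j => sum_f_R0 (fun k => PS_mult (a k) (b (i - k)%nat) j * y ^ j) i)).
    { intros j. unfold PS_mult. rewrite <- scal_sum. simpl. ring. }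
    apply is_series_sum_f_R0. intros k _. apply is_pseries_R, is_pseries_mult.
    - apply is_pseries_R, Series_correct, (ex_series_row a r); auto; lra.
    - apply is_pseries_R, Series_correct, (ex_series_row b r); auto; lra.
    - apply (Rbar_lt_le_trans _ r); [simpl; lra|]. now apply (CV_radius_row_ge a).
    - apply (Rbar_lt_le_trans _ r); [simpl; lra|]. now apply (CV_radius_row_ge b). }
  split.
  - intros i. apply (ex_series_ext (fun j => x ^ i * (dconv a b i j * y ^ j))); [intros j; simpl; ring|].
    exists (x ^ i * PS_mult A B i). exact (is_series_scal_l (x ^ i) _ _ (Hrow i)).
  - rewrite !DPSeries_PSeries_x.
    assert (Hprod : is_pseries (PS_mult A B) x (PSeries A x * PSeries B x))
      by (apply is_pseries_mult; auto using PSeries_correct, CV_radius_inside).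
    apply is_pseries_R in Hprod. eapply is_series_ext; [|exact Hprod]. intros i. simpl.
    rewrite <- (is_series_unique _ _ (Hrow i)), <- Series_scal_r.
    apply Series_ext. intros j. ring.
Qed.

Definition dabs (a : dseq) : dseq := fun i j => Rabs (a i j).
Definition dplus (a b : dseq) : dseq := fun i j => a i j + b i j.

Lemma abs_summable_dominated (a b : dseq) (r : R) : 0 <= r ->
  (forall i j, Rabs (a i j) <= Rabs (b i j)) -> abs_summable b r -> abs_summable a r.
Proof.
  intros Hr Hab [Hrow Hsum].
  assert (Hle : forall i j, Rabs (Rabs (a i j) * r ^ (i + j)) <= Rabs (b i j) * r ^ (i + j)).
  { intros i j. rewrite Rabs_mult, Rabs_Rabsolu, (Rabs_pos_eq (r ^ _)) by (apply pow_le; lra).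
    apply Rmult_le_compat_r; [apply pow_le; lra|apply Hab]. }
  assert (Hrow' : forall i, ex_series (fun j => Rabs (a i j) * r ^ (i + j)))
    by (intros i; exact (ex_series_le_R _ _ (Hle i) (Hrow i))).
  split; [exact Hrow'|]. refine (ex_series_le_R _ _ _ Hsum). intros i.
  rewrite Rabs_pos_eq by (apply Series_nonneg; [intros j; apply Rmult_le_pos; [apply Rabs_pos|apply pow_le; lra]|auto]).
  apply Series_le_Series; auto. intros j. eapply Rle_trans; [apply Rle_abs|apply Hle].
Qed.

Lemma abs_summable_of_is_DPSeries (a : dseq) (r l : R) : 0 <= r ->
  (forall i j, 0 <= a i j) -> is_DPSeries a r r l -> abs_summable a r.
Proof.
  intros Hr Ha [Hrow Hsum].
  assert (E : forall i j, Rabs (a i j) * r ^ (i + j) = a i j * r ^ i * r ^ j)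
    by (intros i j; rewrite (Rabs_pos_eq _ (Ha i j)), pow_add; ring).
  split.
  - intros i. exact (ex_series_ext _ _ (fun j => eq_sym (E i j)) (Hrow i)).
  - exists l. refine (is_series_ext _ _ _ _ Hsum). intros i. apply Series_ext. intros j. now rewrite E.
Qed.

Lemma abs_summable_dplus (a b : dseq) (r : R) : 0 <= r ->
  abs_summable a r -> abs_summable b r -> abs_summable (dplus a b) r.
Proof.
  intros Hr [Hra Hsa] [Hrb Hsb].
  apply (abs_summable_dominated _ (dplus (dabs a) (dabs b)) _ Hr).
  { intros i j. unfold dplus, dabs.
    rewrite (Rabs_pos_eq (Rabs (a i j) + Rabs (b i j))) by (apply Rplus_le_le_0_compat; apply Rabs_pos).
    apply Rabs_triang. }
  assert (E : forall i j, Rabs (dplus (dabs a) (dabs b) i j) * r ^ (i + j)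
                        = Rabs (a i j) * r ^ (i + j) + Rabs (b i j) * r ^ (i + j)).
  { intros i j. unfold dplus, dabs.
    rewrite Rabs_pos_eq by (apply Rplus_le_le_0_compat; apply Rabs_pos). ring. }
  split.
  - intros i. apply (ex_series_ext _ _ (fun j => eq_sym (E i j))). now apply (ex_series_plus (V := R_NormedModule)).
  - apply (ex_series_ext (fun i => Series (fun j => Rabs (a i j) * r ^ (i + j))
                                 + Series (fun j => Rabs (b i j) * r ^ (i + j)))).
    + intros i. rewrite <- Series_plus by auto. apply Series_ext. intros j. now rewrite E.
    + now apply (ex_series_plus (V := R_NormedModule)).
Qed.

Lemma dconv_dabs_le (a b : dseq) (i j : nat) : Rabs (dconv a b i j) <= dconv (dabs a) (dabs b) i j.
Proof.
  unfold dconv, dabs. eapply Rle_trans; [apply sum_f_R0_triangle|].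
  apply sum_Rle. intros k _. eapply Rle_trans; [apply sum_f_R0_triangle|].
  apply sum_Rle. intros l _. rewrite Rabs_mult. lra.
Qed.

Lemma dconv_nonneg (a b : dseq) (i j : nat) :
  (forall i j, 0 <= a i j) -> (forall i j, 0 <= b i j) -> 0 <= dconv a b i j.
Proof.
  intros Ha Hb. unfold dconv. apply cond_pos_sum. intros k.
  apply cond_pos_sum. intros l. apply Rmult_le_pos; auto.
Qed.

Lemma abs_summable_dabs (a : dseq) (r : R) : abs_summable a r -> abs_summable (dabs a) r.
Proof.
  intros [Hrow Hsum]. unfold dabs. split.
  - intros i. refine (ex_series_ext _ _ _ (Hrow i)). intros j. now rewrite Rabs_Rabsolu.
  - refine (ex_series_ext _ _ _ Hsum). intros i. apply Series_ext. intros j. now rewrite Rabs_Rabsolu.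
Qed.

Lemma abs_summable_dconv (a b : dseq) (r r' : R) : 0 <= r' < r ->
  abs_summable a r -> abs_summable b r -> abs_summable (dconv a b) r'.
Proof.
  intros Hr Ha Hb. apply (abs_summable_dominated _ (dconv (dabs a) (dabs b))); [lra| |].
  - intros i j. rewrite (Rabs_pos_eq (dconv (dabs a) (dabs b) i j)); [apply dconv_dabs_le|].
    apply dconv_nonneg; intros; apply Rabs_pos.
  - assert (Hr' : Rabs r' < r) by (rewrite Rabs_pos_eq; lra).
    eapply abs_summable_of_is_DPSeries; [lra| |].
    + intros i j. apply dconv_nonneg; intros; apply Rabs_pos.
    + apply is_DPSeries_dconv with r; auto using abs_summable_dabs.
Qed.

Lemma box_within_closed (rho x y : R) : box rho x y ->
  exists m, 0 <= m < rho /\ Rabs x <= m /\ Rabs y <= m.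
Proof.
  intros [Hx Hy]. exists (Rmax (Rabs x) (Rabs y)).
  split; [split; [eapply Rle_trans; [apply Rabs_pos|apply Rmax_l]|now apply Rmax_lub_lt]|].
  split; [apply Rmax_l|apply Rmax_r].
Qed.

Lemma has_dpseries_plus (rho : R) (a b : dseq) (F G : R -> R -> R) :
  has_dpseries rho a F -> has_dpseries rho b G -> has_dpseries rho (dplus a b) (fun x y => F x y + G x y).
Proof.
  intros [Ha HF] [Hb HG]. split.
  - intros r Hr. apply abs_summable_dplus; [lra|apply Ha|apply Hb]; lra.
  - intros x y Hxy. destruct (box_within_closed rho x y Hxy) as (m & Hm & Hx & Hy).
    destruct (abs_summable_is_DPSeries a m x y (Ha m Hm) Hx Hy) as [Hra Hsa].
    destruct (abs_summable_is_DPSeries b m x y (Hb m Hm) Hx Hy) as [Hrb Hsb].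
    rewrite HF, HG by exact Hxy. symmetry. apply is_series_unique.
    refine (is_series_ext _ _ _ _ (is_series_plus _ _ _ _ Hsa Hsb)). intros i. simpl.
    rewrite <- Series_plus by auto. apply Series_ext. intros j. unfold dplus. simpl. ring.
Qed.

Lemma has_dpseries_mult (rho : R) (a b : dseq) (F G : R -> R -> R) :
  has_dpseries rho a F -> has_dpseries rho b G -> has_dpseries rho (dconv a b) (fun x y => F x y * G x y).
Proof.
  intros [Ha HF] [Hb HG]. split.
  - intros r Hr. apply (abs_summable_dconv a b ((r + rho) / 2)); [lra|apply Ha|apply Hb]; lra.
  - intros x y Hxy. destruct (box_within_closed rho x y Hxy) as (m & Hm & Hx & Hy).
    destruct (is_DPSeries_dconv a b ((m + rho) / 2) x y) as [_ Hs]; [apply Ha|apply Hb|lra|lra|]; [lra..|].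
    rewrite HF, HG by exact Hxy. symmetry. now apply is_series_unique.
Qed.


Definition dsupported (N : nat) (a : dseq) : Prop :=
  forall i j, (N < i)%nat \/ (N < j)%nat -> a i j = 0.

Definition dsum (N : nat) (a : dseq) (x y : R) : R :=
  sum_f_R0 (fun i => sum_f_R0 (fun j => a i j * x ^ i * y ^ j) N) N.

Lemma is_DPSeries_dsum (N : nat) (a : dseq) (x y : R) :
  dsupported N a -> is_DPSeries a x y (dsum N a x y).
Proof.
  intros Ha.
  assert (Hrow : forall i, is_series (fun j => a i j * x ^ i * y ^ j) (sum_f_R0 (fun j => a i j * x ^ i * y ^ j) N)).
  { intros i. apply is_series_finite. intros j Hj. rewrite Ha by lia. ring. }
  split; [intros i; eexists; apply Hrow|].
  apply (is_series_ext (fun i => sum_f_R0 (fun j => a i j * x ^ i * y ^ j) N)).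
  - intros i. symmetry. now apply is_series_unique.
  - apply is_series_finite. intros i Hi. apply sum_f_R0_zero. intros j _. rewrite Ha by lia. ring.
Qed.

Lemma DPSeries_dsum (N : nat) (a : dseq) (x y : R) : dsupported N a -> DPSeries a x y = dsum N a x y.
Proof. intros Ha. apply is_series_unique, (is_DPSeries_dsum N a x y Ha). Qed.

Lemma abs_summable_dsupported (N : nat) (a : dseq) (r : R) : 0 <= r -> dsupported N a -> abs_summable a r.
Proof.
  intros Hr Ha. apply (abs_summable_dominated _ (dabs a)); [exact Hr|intros; unfold dabs; rewrite Rabs_Rabsolu; lra|].
  apply (abs_summable_of_is_DPSeries _ r (dsum N (dabs a) r r) Hr); [intros; apply Rabs_pos|].
  apply is_DPSeries_dsum. intros i j Hij. unfold dabs. rewrite Ha by exact Hij. apply Rabs_R0.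
Qed.

Lemma has_dpseries_dsum (rho : R) (N : nat) (a : dseq) : dsupported N a -> has_dpseries rho a (dsum N a).
Proof.
  intros Ha. split.
  - intros r Hr. apply (abs_summable_dsupported N); [lra|exact Ha].
  - intros x y _. symmetry. now apply DPSeries_dsum.
Qed.

Lemma has_dpseries_ext (rho : R) (a : dseq) (F G : R -> R -> R) :
  has_dpseries rho a F -> (forall x y, box rho x y -> F x y = G x y) -> has_dpseries rho a G.
Proof. intros [Ha HF] HFG. split; [exact Ha|]. intros x y Hxy. rewrite <- HFG; auto. Qed.

Definition dconst (c : R) : dseq := fun i j => match i, j with O, O => c | _, _ => 0 end.
Definition dX : dseq := fun i j => match i, j with 1%nat, O => 1 | _, _ => 0 end.
Definition dY : dseq := fun i j => match i, j with O, 1%nat => 1 | _, _ => 0 end.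

Lemma has_dpseries_const (rho c : R) : has_dpseries rho (dconst c) (fun _ _ => c).
Proof.
  eapply has_dpseries_ext; [apply (has_dpseries_dsum _ 0)|].
  - intros [|i] [|j] H; simpl; auto; lia.
  - intros x y _. unfold dsum. simpl. ring.
Qed.

Lemma has_dpseries_X (rho : R) : has_dpseries rho dX (fun x _ => x).
Proof.
  eapply has_dpseries_ext; [apply (has_dpseries_dsum _ 1)|].
  - intros [|[|i]] [|[|j]] H; simpl; auto; lia.
  - intros x y _. unfold dsum. simpl. ring.
Qed.

Lemma has_dpseries_Y (rho : R) : has_dpseries rho dY (fun _ y => y).
Proof.
  eapply has_dpseries_ext; [apply (has_dpseries_dsum _ 1)|].
  - intros [|[|i]] [|[|j]] H; simpl; auto; lia.
  - intros x y _. unfold dsum. simpl. ring.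
Qed.

Lemma has_dpseries_analytic0 (rho : R) (a : dseq) (F : R -> R -> R) :
  0 < rho -> has_dpseries rho a F -> analytic0 F.
Proof.
  intros Hrho [Ha HF]. exists (rho / 2). split; [lra|]. exists a.
  destruct (Ha (rho / 2)) as [Hrow Hsum]; [lra|].
  split; [exact Hrow|]. split; [exact Hsum|].
  intros x y [Hx Hy]. rewrite HF by (split; lra).
  apply (is_series_DPSeries a (rho / 2)); [apply Ha|..]; lra.
Qed.

(** * Expressions and formal fixed points *)

(* [ELeaf a F M] is a given analytic function [F] with coefficients [a]; [M]
   bounds the truncated norms of [a] and replaces the leaf in majorants. *)
Inductive expr : Type :=
| ECst (c : R)
| EX | EY | ET
| ELeaf (a : dseq) (F : R -> R -> R) (M : R)
| EAdd (e1 e2 : expr)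
| EMul (e1 e2 : expr).

Fixpoint eval (e : expr) (x y t : R) : R :=
  match e with
  | ECst c => c
  | EX => x
  | EY => y
  | ET => t
  | ELeaf _ F _ => F x y
  | EAdd e1 e2 => eval e1 x y t + eval e2 x y t
  | EMul e1 e2 => eval e1 x y t * eval e2 x y t
  end.

Fixpoint eval_dseq (e : expr) (a : dseq) : dseq :=
  match e with
  | ECst c => dconst c
  | EX => dX
  | EY => dY
  | ET => a
  | ELeaf b _ _ => b
  | EAdd e1 e2 => dplus (eval_dseq e1 a) (eval_dseq e2 a)
  | EMul e1 e2 => dconv (eval_dseq e1 a) (eval_dseq e2 a)
  end.

Fixpoint leaves_have_dpseries (rho : R) (e : expr) : Prop :=
  match e with
  | ELeaf b F _ => has_dpseries rho b F
  | EAdd e1 e2 | EMul e1 e2 => leaves_have_dpseries rho e1 /\ leaves_have_dpseries rho e2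
  | _ => True
  end.

Lemma has_dpseries_eval (rho : R) (e : expr) (a : dseq) (F : R -> R -> R) :
  has_dpseries rho a F -> leaves_have_dpseries rho e ->
  has_dpseries rho (eval_dseq e a) (fun x y => eval e x y (F x y)).
Proof.
  intros Ha. induction e as [c| | | |b G M|e1 IH1 e2 IH2|e1 IH1 e2 IH2]; simpl; intros He.
  - apply has_dpseries_const.
  - apply has_dpseries_X.
  - apply has_dpseries_Y.
  - exact Ha.
  - exact He.
  - apply has_dpseries_plus; tauto.
  - apply has_dpseries_mult; tauto.
Qed.

Definition vanish_below (m : nat) (a : dseq) : Prop := forall i j, (i + j < m)%nat -> a i j = 0.
Definition agree_below (n : nat) (a b : dseq) : Prop := forall i j, (i + j < n)%nat -> a i j = b i j.

Fixpoint order (e : expr) : nat :=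
  match e with
  | ECst _ | ELeaf _ _ _ => 0
  | EX | EY | ET => 1
  | EAdd e1 e2 => Nat.min (order e1) (order e2)
  | EMul e1 e2 => order e1 + order e2
  end.

Lemma dconv_vanish_below (m1 m2 : nat) (a b : dseq) :
  vanish_below m1 a -> vanish_below m2 b -> vanish_below (m1 + m2) (dconv a b).
Proof.
  intros Ha Hb i j Hij. apply sum_f_R0_zero. intros k Hk. apply sum_f_R0_zero. intros l Hl.
  destruct (Compare_dec.lt_dec (k + l) m1) as [H|H].
  - rewrite Ha by exact H. ring.
  - rewrite (Hb (i - k)%nat (j - l)%nat) by lia. ring.
Qed.

Lemma vanish_below_eval_dseq (e : expr) (a : dseq) :
  vanish_below 1 a -> vanish_below (order e) (eval_dseq e a).
Proof.
  intros Ha. induction e; simpl; intros i j Hij.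
  - lia.
  - destruct i as [|[|i]], j; simpl; auto; lia.
  - destruct i, j as [|[|j]]; simpl; auto; lia.
  - apply Ha. exact Hij.
  - lia.
  - unfold dplus. rewrite IHe1, IHe2 by lia. ring.
  - exact (dconv_vanish_below _ _ _ _ IHe1 IHe2 i j Hij).
Qed.

(* [gain e = Some d]: if [a] and [b] vanish at the origin and agree below
   order [n], then [eval_dseq e a] and [eval_dseq e b] agree below order [n + d];
   [gain e = None]: [e] does not depend on [ET]. *)
Fixpoint gain (e : expr) : option nat :=
  match e with
  | ET => Some 0%nat
  | EAdd e1 e2 =>
      match gain e1, gain e2 with
      | Some d1, Some d2 => Some (Nat.min d1 d2)
      | Some d, None | None, Some d => Some d
      | None, None => None
      end
  | EMul e1 e2 =>
      match gain e1, gain e2 with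
      | Some d1, Some d2 => Some (Nat.min (d1 + order e2) (d2 + order e1))
      | Some d1, None => Some (d1 + order e2)%nat
      | None, Some d2 => Some (d2 + order e1)%nat
      | None, None => None
      end
  | _ => None
  end.

Definition agree_gain (g : option nat) (n : nat) (a b : dseq) : Prop :=
  match g with
  | None => forall i j, a i j = b i j
  | Some d => agree_below (n + d) a b
  end.

Lemma dconv_agree_below (n1 n2 o1 o2 : nat) (a1 a2 b1 b2 : dseq) :
  agree_below n1 a1 a2 -> agree_below n2 b1 b2 ->
  vanish_below o1 a2 -> vanish_below o2 b1 -> vanish_below o2 b2 ->
  agree_below (Nat.min (n1 + o2) (n2 + o1)) (dconv a1 b1) (dconv a2 b2).
Proof.
  intros Ha Hb La2 Lb1 Lb2 i j Hij. apply sum_eq. intros k Hk. apply sum_eq. intros l Hl.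
  destruct (Compare_dec.lt_dec (k + l) n1) as [H1|H1].
  - rewrite (Ha k l H1).
    destruct (Compare_dec.lt_dec ((i - k) + (j - l)) n2) as [H2|H2].
    + now rewrite (Hb _ _ H2).
    + rewrite La2 by lia. ring.
  - rewrite (Lb1 (i - k)%nat (j - l)%nat), (Lb2 (i - k)%nat (j - l)%nat) by lia. ring.
Qed.

Lemma gain_spec (e : expr) (n : nat) (a b : dseq) :
  vanish_below 1 a -> vanish_below 1 b -> agree_below n a b ->
  agree_gain (gain e) n (eval_dseq e a) (eval_dseq e b).
Proof.
  intros La Lb Hab. induction e as [| | | | |e1 IH1 e2 IH2|e1 IH1 e2 IH2]; simpl; auto.
  - intros i j Hij. apply Hab. lia.
  - unfold dplus. destruct (gain e1) as [d1|], (gain e2) as [d2|]; simpl in *.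
    1-3: intros i j Hij; rewrite IH1, IH2 by lia; reflexivity.
    intros i j. now rewrite IH1, IH2.
  - pose proof (vanish_below_eval_dseq e1 a La). pose proof (vanish_below_eval_dseq e1 b Lb).
    pose proof (vanish_below_eval_dseq e2 a La). pose proof (vanish_below_eval_dseq e2 b Lb).
    destruct (gain e1) as [d1|], (gain e2) as [d2|]; simpl in *.
    + intros i j Hij. apply (dconv_agree_below (n + d1) (n + d2) (order e1) (order e2)); auto. lia.
    + intros i j Hij.
      apply (dconv_agree_below (n + d1) (n + d1 + order e2 + order e1) (order e1) (order e2)); auto.
      * intros k l _. apply IH2.
      * lia.
    + intros i j Hij.
      apply (dconv_agree_below (n + d2 + order e1 + order e2) (n + d2) (order e1) (order e2)); auto.
      * intros k l _. apply IH1.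
      * lia.
    + intros i j. unfold dconv. apply sum_eq. intros k _. apply sum_eq. intros l _.
      now rewrite IH1, IH2.
Qed.

Definition contracting (T : expr) : Prop :=
  (1 <= order T)%nat /\ match gain T with None => True | Some d => (1 <= d)%nat end.

Fixpoint picard (T : expr) (n : nat) : dseq :=
  match n with
  | O => fun _ _ => 0
  | S n => eval_dseq T (picard T n)
  end.

(* The coefficient of order [i + j] is fixed from the [(i + j + 1)]-th iterate on. *)
Definition fix_dseq (T : expr) : dseq := fun i j => picard T (S (i + j)) i j.

Section Picard.

Variable T : expr.
Hypothesis HT : contracting T.

Lemma gain_contracting (n : nat) (a b : dseq) :
  vanish_below 1 a -> vanish_below 1 b -> agree_below n a b ->
  agree_below (S n) (eval_dseq T a) (eval_dseq T b).
Proof.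
  intros La Lb Hab i j Hij. pose proof (gain_spec T n a b La Lb Hab) as H.
  destruct HT as [_ Hd]. destruct (gain T) as [d|]; simpl in H; [apply H; lia|apply H].
Qed.

Lemma picard_vanish_below (n : nat) : vanish_below 1 (picard T n).
Proof.
  induction n as [|n IH]; simpl; [intros i j _; reflexivity|].
  intros i j Hij. apply (vanish_below_eval_dseq T _ IH). destruct HT; lia.
Qed.

Lemma picard_agree_below (n m : nat) : (n <= m)%nat -> agree_below n (picard T n) (picard T m).
Proof.
  revert m. induction n as [|n IH]; intros m Hnm; [intros i j Hij; lia|].
  destruct m as [|m]; [lia|]. simpl.
  apply gain_contracting; auto using picard_vanish_below. apply IH. lia.
Qed.

Lemma fix_dseq_agree_below (n : nat) : agree_below n (fix_dseq T) (picard T n).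
Proof.
  intros i j Hij. unfold fix_dseq.
  destruct (Compare_dec.le_lt_dec (S (i + j)) n) as [Hle|Hlt].
  - apply picard_agree_below; [exact Hle|lia].
  - symmetry. apply picard_agree_below; lia.
Qed.

Lemma fix_dseq_vanish_below : vanish_below 1 (fix_dseq T).
Proof. intros i j Hij. apply picard_vanish_below. exact Hij. Qed.

Lemma eval_dseq_fix_dseq : eval_dseq T (fix_dseq T) = fix_dseq T.
Proof.
  apply functional_extensionality. intros i. apply functional_extensionality. intros j.
  unfold fix_dseq at 2. simpl.
  apply (gain_contracting (i + j)); auto using fix_dseq_vanish_below, picard_vanish_below, fix_dseq_agree_below.
Qed.

End Picard.

(** * Convergence of the fixed point by majorants *)

Definition dtrunc (N : nat) (a : dseq) : dseq := fun i j => if (i + j <=? N)%nat then a i j else 0.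

Definition tnorm (r : R) (N : nat) (a : dseq) : R := dsum N (dabs (dtrunc N a)) r r.

Lemma dsupported_dtrunc (N : nat) (a : dseq) : dsupported N (dabs (dtrunc N a)).
Proof.
  intros i j H. unfold dabs, dtrunc. destruct (Nat.leb_spec (i + j) N); [lia|]. apply Rabs_R0.
Qed.

Lemma dsupported_le (K K' : nat) (a : dseq) : (K <= K')%nat -> dsupported K a -> dsupported K' a.
Proof. intros HK Ha i j Hij. apply Ha. lia. Qed.

Lemma dsum_widen (K K' : nat) (a : dseq) (x y : R) :
  (K <= K')%nat -> dsupported K a -> dsum K a x y = dsum K' a x y.
Proof.
  intros HK Ha. rewrite <- (DPSeries_dsum K), <- (DPSeries_dsum K'); [reflexivity| |exact Ha].
  exact (dsupported_le K K' a HK Ha).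
Qed.

Lemma dsum_le (K : nat) (a b : dseq) (x y : R) : 0 <= x -> 0 <= y ->
  (forall i j, a i j <= b i j) -> dsum K a x y <= dsum K b x y.
Proof.
  intros Hx Hy Hab. apply sum_Rle. intros i _. apply sum_Rle. intros j _.
  apply Rmult_le_compat_r; [apply pow_le; lra|]. apply Rmult_le_compat_r; [apply pow_le; lra|auto].
Qed.

Lemma dsum_nonneg (K : nat) (a : dseq) (x y : R) : 0 <= x -> 0 <= y ->
  (forall i j, 0 <= a i j) -> 0 <= dsum K a x y.
Proof.
  intros Hx Hy Ha. apply cond_pos_sum. intros i. apply cond_pos_sum. intros j.
  apply Rmult_le_pos; [apply Rmult_le_pos; [auto|]|]; apply pow_le; lra.
Qed.

Lemma dsum_dplus (K : nat) (a b : dseq) (x y : R) : dsum K (dplus a b) x y = dsum K a x y + dsum K b x y.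
Proof.
  unfold dsum, dplus. rewrite <- sum_plus. apply sum_eq. intros i _.
  rewrite <- sum_plus. apply sum_eq. intros j _. ring.
Qed.

Lemma dnorm_DPSeries (a : dseq) (r : R) : dnorm a r = DPSeries (dabs a) r r.
Proof. apply Series_ext. intros i. apply Series_ext. intros j. unfold dabs. rewrite pow_add. ring. Qed.

Lemma tnorm_nonneg (r : R) (N : nat) (a : dseq) : 0 <= r -> 0 <= tnorm r N a.
Proof. intros Hr. apply dsum_nonneg; auto. intros i j. apply Rabs_pos. Qed.

Lemma tnorm_le_dnorm (r : R) (N : nat) (a : dseq) : 0 <= r -> abs_summable a r -> tnorm r N a <= dnorm a r.
Proof.
  intros Hr [Hrow Hsum].
  assert (Hnn : forall i j, 0 <= Rabs (a i j) * r ^ (i + j))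
    by (intros; apply Rmult_le_pos; [apply Rabs_pos|apply pow_le; lra]).
  eapply Rle_trans; [|apply (sum_f_R0_le_Series _ N); [intros; apply Series_nonneg|]; auto].
  apply sum_Rle. intros i _. eapply Rle_trans; [|apply (sum_f_R0_le_Series _ N); auto].
  apply sum_Rle. intros j _. unfold dabs, dtrunc.
  destruct (i + j <=? N)%nat; [rewrite pow_add; lra|]. rewrite Rabs_R0, !Rmult_0_l. apply Hnn.
Qed.

Lemma tnorm_le_dsum (r : R) (N K : nat) (a : dseq) : 0 <= r -> dsupported K a ->
  tnorm r N a <= dsum K (dabs a) r r.
Proof.
  intros Hr Ha. rewrite <- DPSeries_dsum, <- dnorm_DPSeries.
  - apply tnorm_le_dnorm; [exact Hr|]. now apply (abs_summable_dsupported K).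
  - intros i j Hij. unfold dabs. rewrite Ha by exact Hij. apply Rabs_R0.
Qed.

Lemma tnorm_dplus (r : R) (N : nat) (a b : dseq) : 0 <= r ->
  tnorm r N (dplus a b) <= tnorm r N a + tnorm r N b.
Proof.
  intros Hr. unfold tnorm. rewrite <- dsum_dplus. apply dsum_le; auto.
  intros i j. unfold dabs, dtrunc, dplus. destruct (i + j <=? N)%nat; [apply Rabs_triang|].
  rewrite Rabs_R0. lra.
Qed.

Lemma dsupported_dconv (K : nat) (a b : dseq) : dsupported K a -> dsupported K b -> dsupported (K + K) (dconv a b).
Proof.
  intros Ha Hb i j Hij. apply sum_f_R0_zero. intros k Hk. apply sum_f_R0_zero. intros l Hl.
  destruct (Compare_dec.le_dec k K), (Compare_dec.le_dec l K).
  - rewrite (Hb (i - k)%nat (j - l)%nat) by lia. ring.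
  - rewrite Ha by lia. ring.
  - rewrite Ha by lia. ring.
  - rewrite Ha by lia. ring.
Qed.

(* Below order [N], the coefficients of [dconv a b] only involve those of [a]
   and [b] below order [N]. *)
Lemma tnorm_dconv (r : R) (N : nat) (a b : dseq) : 0 <= r ->
  tnorm r N (dconv a b) <= tnorm r N a * tnorm r N b.
Proof.
  intros Hr. unfold tnorm.
  set (A := dabs (dtrunc N a)). set (B := dabs (dtrunc N b)).
  assert (HA : dsupported N A) by apply dsupported_dtrunc.
  assert (HB : dsupported N B) by apply dsupported_dtrunc.
  assert (Hr1 : Rabs r < r + 1) by (rewrite Rabs_pos_eq; lra).
  pose proof (is_DPSeries_dconv A B (r + 1) r r (abs_summable_dsupported N A (r + 1) ltac:(lra) HA)
    (abs_summable_dsupported N B (r + 1) ltac:(lra) HB) Hr1 Hr1) as [_ Hprod].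
  rewrite <- (DPSeries_dsum N A), <- (DPSeries_dsum N B) by assumption.
  replace (DPSeries A r r * DPSeries B r r) with (DPSeries (dconv A B) r r)
    by exact (is_series_unique _ _ Hprod).
  rewrite (DPSeries_dsum (N + N) (dconv A B)) by (apply dsupported_dconv; assumption).
  rewrite (dsum_widen N (N + N)) by (lia || apply dsupported_dtrunc).
  apply dsum_le; auto. intros i j. unfold A, B, dabs, dtrunc at 1.
  destruct (Nat.leb_spec (i + j) N).
  - eapply Rle_trans; [apply dconv_dabs_le|]. unfold dconv, dabs. apply sum_Rle. intros k Hk.
    apply sum_Rle. intros l Hl. unfold dtrunc.
    destruct (Nat.leb_spec (k + l) N); [|lia]. destruct (Nat.leb_spec (i - k + (j - l)) N); [|lia]. lra.
  - rewrite Rabs_R0. apply dconv_nonneg; intros; apply Rabs_pos.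
Qed.

Lemma tnorm_const (r : R) (N : nat) (c : R) : 0 <= r -> tnorm r N (dconst c) <= Rabs c.
Proof.
  intros Hr. eapply Rle_trans; [apply (tnorm_le_dsum r N 0); [exact Hr|]|].
  - intros [|i] [|j] H; simpl; auto; lia.
  - unfold dsum, dabs. simpl. lra.
Qed.

Lemma tnorm_X (r : R) (N : nat) : 0 <= r -> tnorm r N dX <= r.
Proof.
  intros Hr. eapply Rle_trans; [apply (tnorm_le_dsum r N 1); [exact Hr|]|].
  - intros [|[|i]] [|[|j]] H; simpl; auto; lia.
  - unfold dsum, dabs. simpl. rewrite Rabs_R0, Rabs_R1. lra.
Qed.

Lemma tnorm_Y (r : R) (N : nat) : 0 <= r -> tnorm r N dY <= r.
Proof.
  intros Hr. eapply Rle_trans; [apply (tnorm_le_dsum r N 1); [exact Hr|]|].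
  - intros [|[|i]] [|[|j]] H; simpl; auto; lia.
  - unfold dsum, dabs. simpl. rewrite Rabs_R0, Rabs_R1. lra.
Qed.

Lemma tnorm_agree_below (r : R) (N : nat) (a b : dseq) : agree_below (S N) a b -> tnorm r N a = tnorm r N b.
Proof.
  intros Hab. apply sum_eq. intros i _. apply sum_eq. intros j _. unfold dabs, dtrunc.
  destruct (Nat.leb_spec (i + j) N); [|reflexivity]. rewrite Hab by lia. reflexivity.
Qed.

Fixpoint majorant (e : expr) : expr :=
  match e with
  | ECst c => ECst (Rabs c)
  | ELeaf _ _ M => ECst M
  | EAdd e1 e2 => EAdd (majorant e1) (majorant e2)
  | EMul e1 e2 => EMul (majorant e1) (majorant e2)
  | e => e
  end.

Fixpoint leaves_bounded (r : R) (e : expr) : Prop :=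
  match e with
  | ELeaf a _ M => forall N, tnorm r N a <= M
  | EAdd e1 e2 | EMul e1 e2 => leaves_bounded r e1 /\ leaves_bounded r e2
  | _ => True
  end.

Lemma majorant_nonneg (r t : R) (e : expr) : 0 <= r -> 0 <= t -> leaves_bounded r e ->
  0 <= eval (majorant e) r r t.
Proof.
  intros Hr Ht. induction e; simpl; intros He; auto.
  - apply Rabs_pos.
  - eapply Rle_trans; [apply (tnorm_nonneg r 0 a Hr)|apply He].
  - apply Rplus_le_le_0_compat; tauto.
  - apply Rmult_le_pos; tauto.
Qed.

Lemma majorant_le (r t t' : R) (e : expr) : 0 <= r -> 0 <= t <= t' -> leaves_bounded r e ->
  eval (majorant e) r r t <= eval (majorant e) r r t'.
Proof.
  intros Hr Ht. induction e; simpl; intros He; try lra.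
  - destruct He as [H1 H2]. specialize (IHe1 H1). specialize (IHe2 H2). lra.
  - destruct He as [H1 H2].
    apply Rmult_le_compat; auto; apply majorant_nonneg; auto; lra.
Qed.

Lemma tnorm_eval_dseq (r : R) (N : nat) (e : expr) (a : dseq) : 0 <= r -> leaves_bounded r e ->
  tnorm r N (eval_dseq e a) <= eval (majorant e) r r (tnorm r N a).
Proof.
  intros Hr. induction e; simpl; intros He.
  - now apply tnorm_const.
  - now apply tnorm_X.
  - now apply tnorm_Y.
  - lra.
  - apply He.
  - destruct He as [H1 H2]. eapply Rle_trans; [now apply tnorm_dplus|].
    specialize (IHe1 H1). specialize (IHe2 H2). lra.
  - destruct He as [H1 H2]. eapply Rle_trans; [now apply tnorm_dconv|].
    apply Rmult_le_compat; auto; apply tnorm_nonneg; auto.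
Qed.

Lemma tnorm_picard (T : expr) (r tau : R) (N n : nat) : 0 <= r -> 0 <= tau -> leaves_bounded r T ->
  eval (majorant T) r r tau <= tau -> tnorm r N (picard T n) <= tau.
Proof.
  intros Hr Htau HT Hfix. induction n as [|n IH]; simpl.
  - replace (tnorm r N (fun _ _ => 0)) with 0; [exact Htau|].
    symmetry. apply sum_f_R0_zero. intros i _. apply sum_f_R0_zero. intros j _.
    unfold dabs, dtrunc. destruct (i + j <=? N)%nat; rewrite Rabs_R0; ring.
  - eapply Rle_trans; [now apply tnorm_eval_dseq|]. eapply Rle_trans; [|exact Hfix].
    apply majorant_le; auto. split; [apply tnorm_nonneg|]; auto.
Qed.

Lemma rect_le_tnorm (r : R) (c : dseq) (I J : nat) : 0 <= r ->
  sum_f_R0 (fun i => sum_f_R0 (fun j => Rabs (c i j) * r ^ (i + j)) J) I <= tnorm r (I + J) c.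
Proof.
  intros Hr.
  assert (Hnn : forall i j, 0 <= dabs (dtrunc (I + J) c) i j * r ^ i * r ^ j).
  { intros i j. unfold dabs. apply Rmult_le_pos; [apply Rmult_le_pos; [apply Rabs_pos|]|]; apply pow_le; lra. }
  apply Rle_trans with (sum_f_R0 (fun i => sum_f_R0 (fun j => dabs (dtrunc (I + J) c) i j * r ^ i * r ^ j) (I + J)) I);
    [|apply sum_f_R0_le_mono; [intros i; apply cond_pos_sum; intros j; apply Hnn|lia]].
  apply sum_Rle. intros i Hi.
  apply Rle_trans with (sum_f_R0 (fun j => dabs (dtrunc (I + J) c) i j * r ^ i * r ^ j) J);
    [|apply sum_f_R0_le_mono; [intros j; apply Hnn|lia]].
  apply sum_Rle. intros j Hj. unfold dabs, dtrunc.
  destruct (Nat.leb_spec (i + j) (I + J)); [|lia]. rewrite pow_add. lra.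
Qed.

Lemma abs_summable_of_tnorm_le (c : dseq) (r tau : R) : 0 <= r -> (forall N, tnorm r N c <= tau) ->
  abs_summable c r /\ dnorm c r <= tau.
Proof.
  intros Hr Hc.
  assert (Hnn : forall i j, 0 <= Rabs (c i j) * r ^ (i + j))
    by (intros; apply Rmult_le_pos; [apply Rabs_pos|apply pow_le; lra]).
  assert (Hrow : forall i, ex_series (fun j => Rabs (c i j) * r ^ (i + j))).
  { intros i. apply (ex_series_of_bounded_sums _ tau); auto. intros J.
    eapply Rle_trans; [|apply (Hc (i + J)%nat)]. eapply Rle_trans; [|now apply rect_le_tnorm].
    apply (term_le_sum_f_R0 (fun k => sum_f_R0 (fun j => Rabs (c k j) * r ^ (k + j)) J)); [|lia].
    intros k. now apply cond_pos_sum. }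
  assert (Hpartial : forall I, sum_f_R0 (fun i => Series (fun j => Rabs (c i j) * r ^ (i + j))) I <= tau).
  { intros I. rewrite <- (is_series_unique _ _ (is_series_sum_f_R0 (fun i j => Rabs (c i j) * r ^ (i + j)) _ I
                                                  (fun k _ => Series_correct _ (Hrow k)))).
    apply Series_le_of_bounded_sums; [intros n; now apply cond_pos_sum|].
    intros J. rewrite sum_f_R0_swap. eapply Rle_trans; [now apply rect_le_tnorm|apply Hc]. }
  assert (Hnn' : forall i, 0 <= Series (fun j => Rabs (c i j) * r ^ (i + j)))
    by (intros i; now apply Series_nonneg).
  split; [split; [exact Hrow|]|]; [apply (ex_series_of_bounded_sums _ tau)|apply Series_le_of_bounded_sums]; auto.
Qed.

Section MajorantFixpoint.

Variables (T : expr) (rho tau : R).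
Hypotheses (Hrho : 0 < rho) (Htau : 0 <= tau) (HT : contracting T)
  (Hrep : leaves_have_dpseries rho T) (Hbd : leaves_bounded rho T)
  (Hmaj : eval (majorant T) rho rho tau <= tau).

Lemma abs_summable_fix_dseq : abs_summable (fix_dseq T) rho /\ dnorm (fix_dseq T) rho <= tau.
Proof.
  apply abs_summable_of_tnorm_le; [lra|]. intros N.
  rewrite (tnorm_agree_below rho N _ (picard T (S N))) by now apply fix_dseq_agree_below.
  apply tnorm_picard; auto; lra.
Qed.

Lemma has_dpseries_fix_dseq : has_dpseries rho (fix_dseq T) (DPSeries (fix_dseq T)).
Proof.
  split; [|reflexivity]. intros r Hr.
  apply (abs_summable_radius_le _ rho); [lra|apply abs_summable_fix_dseq].
Qed.

Lemma DPSeries_fix_dseq_eq (x y : R) : box rho x y ->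
  DPSeries (fix_dseq T) x y = eval T x y (DPSeries (fix_dseq T) x y).
Proof.
  intros Hxy. destruct (has_dpseries_eval rho T _ _ has_dpseries_fix_dseq Hrep) as [_ H].
  rewrite eval_dseq_fix_dseq in H by exact HT. now rewrite H.
Qed.

Lemma DPSeries_fix_dseq_bound (x y : R) : Rabs x <= rho -> Rabs y <= rho ->
  Rabs (DPSeries (fix_dseq T) x y) <= tau.
Proof.
  intros Hx Hy. destruct abs_summable_fix_dseq as [Has Hle].
  eapply Rle_trans; [now apply (Rabs_DPSeries_le _ rho)|exact Hle].
Qed.

End MajorantFixpoint.

(** * Interchanging the order of summation *)

Section Fubini.

Variable u : nat -> nat -> R.
Hypothesis Hrow : forall i, ex_series (fun j => Rabs (u i j)).
Hypothesis Hsum : ex_series (fun i => Series (fun j => Rabs (u i j))).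

Lemma ex_series_col_abs (j : nat) : ex_series (fun i => Rabs (u i j)).
Proof.
  refine (ex_series_le_R _ _ _ Hsum). intros i. rewrite Rabs_Rabsolu.
  apply (term_le_Series (fun j => Rabs (u i j))); [intros; apply Rabs_pos|apply Hrow].
Qed.

Lemma is_series_sum_cols_abs (J : nat) :
  is_series (fun i => sum_f_R0 (fun j => Rabs (u i j)) J) (sum_f_R0 (fun j => Series (fun i => Rabs (u i j))) J).
Proof. apply is_series_sum_f_R0. intros k _. apply Series_correct, ex_series_col_abs. Qed.

Lemma sum_cols_abs_le (J : nat) :
  sum_f_R0 (fun j => Series (fun i => Rabs (u i j))) J <= Series (fun i => Series (fun j => Rabs (u i j))).
Proof.
  rewrite <- (is_series_unique _ _ (is_series_sum_cols_abs J)).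
  apply Series_le_Series; [|eexists; apply is_series_sum_cols_abs|exact Hsum].
  intros i. apply sum_f_R0_le_Series; [intros; apply Rabs_pos|apply Hrow].
Qed.

Lemma ex_series_cols_abs : ex_series (fun j => Series (fun i => Rabs (u i j))).
Proof.
  apply (ex_series_of_bounded_sums _ (Series (fun i => Series (fun j => Rabs (u i j))))).
  - intros j. apply Series_nonneg; [intros; apply Rabs_pos|apply ex_series_col_abs].
  - exact sum_cols_abs_le.
Qed.

Lemma Series_cols_abs :
  Series (fun j => Series (fun i => Rabs (u i j))) = Series (fun i => Series (fun j => Rabs (u i j))).
Proof.
  apply Rle_antisym.
  - apply Series_le_of_bounded_sums; [|exact sum_cols_abs_le].
    intros j. apply Series_nonneg; [intros; apply Rabs_pos|apply ex_series_col_abs].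
  - apply Series_le_of_bounded_sums; [intros i; apply Series_nonneg; [intros; apply Rabs_pos|apply Hrow]|].
    intros I. rewrite <- (is_series_unique _ _ (is_series_sum_f_R0 (fun i j => Rabs (u i j)) _ I
                                                  (fun k _ => Series_correct _ (Hrow k)))).
    apply Series_le_of_bounded_sums; [intros n; apply cond_pos_sum; intros; apply Rabs_pos|].
    intros J.
    apply Rle_trans with (sum_f_R0 (fun j => Series (fun i => Rabs (u i j))) J).
    + apply sum_Rle. intros j _. apply sum_f_R0_le_Series; [intros; apply Rabs_pos|apply ex_series_col_abs].
    + apply sum_f_R0_le_Series; [|exact ex_series_cols_abs].
      intros j. apply Series_nonneg; [intros; apply Rabs_pos|apply ex_series_col_abs].
Qed.

Theorem is_series_Series_swap :
  is_series (fun j => Series (fun i => u i j)) (Series (fun i => Series (fun j => u i j))).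
Proof.
  set (S := Series (fun i => Series (fun j => Rabs (u i j)))).
  set (tail := fun J i => Series (fun j => Rabs (u i j)) - sum_f_R0 (fun j => Rabs (u i j)) J).
  assert (Htail : forall J, is_series (tail J) (S - sum_f_R0 (fun j => Series (fun i => Rabs (u i j))) J)).
  { intros J. apply (is_series_minus _ _ _ _ (Series_correct _ Hsum) (is_series_sum_cols_abs J)). }
  assert (Hcols : forall J, is_series (fun i => sum_f_R0 (fun j => u i j) J) (sum_f_R0 (fun j => Series (fun i => u i j)) J)).
  { intros J. apply is_series_sum_f_R0. intros k _. apply Series_correct, ex_series_Rabs, ex_series_col_abs. }
  assert (Hrows : ex_series (fun i => Series (fun j => u i j))).
  { refine (ex_series_le_R _ _ _ Hsum). intros i. apply Series_Rabs, Hrow. }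
  assert (Hdiff : forall J i, Rabs (Series (fun j => u i j) - sum_f_R0 (fun j => u i j) J) <= tail J i).
  { intros J i. apply (Rabs_Series_tail_le (fun j => u i j)), Hrow. }
  apply is_series_Reals. intros eps Heps.
  pose proof (Series_correct _ ex_series_cols_abs) as Hc. rewrite Series_cols_abs in Hc.
  apply is_series_Reals in Hc. destruct (Hc eps Heps) as [N HN]. exists N. intros J HJ.
  specialize (HN J HJ). unfold R_dist in *. fold S in HN.
  rewrite <- (is_series_unique _ _ (Hcols J)), <- Series_minus by (auto; eexists; apply Hcols).
  eapply Rle_lt_trans; [apply Series_Rabs|].
  - refine (ex_series_le_R _ _ _ (ex_intro _ _ (Htail J))). intros i. rewrite Rabs_Rabsolu, Rabs_minus_sym. apply Hdiff.
  - eapply Rle_lt_trans; [apply Series_le_Series; [intros i; rewrite Rabs_minus_sym; apply Hdiff| |eexists; apply Htail]|].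
    + refine (ex_series_le_R _ _ _ (ex_intro _ _ (Htail J))). intros i. rewrite Rabs_Rabsolu, Rabs_minus_sym. apply Hdiff.
    + change (Series (tail J) < eps). rewrite (is_series_unique _ _ (Htail J)). rewrite Rabs_minus_sym, Rabs_pos_eq in HN; [lra|].
      pose proof (sum_cols_abs_le J) as Hle. fold S in Hle. lra.
Qed.

End Fubini.

Definition dtranspose (a : dseq) : dseq := fun i j => a j i.

Lemma abs_summable_dtranspose (a : dseq) (r : R) : 0 <= r -> abs_summable a r -> abs_summable (dtranspose a) r.
Proof.
  intros Hr [Hrow Hsum].
  set (u := fun i j => Rabs (a i j) * r ^ (i + j)).
  assert (Hu : forall i j, Rabs (u i j) = Rabs (dtranspose a j i) * r ^ (j + i)).
  { intros i j. unfold u, dtranspose. rewrite Nat.add_comm, Rabs_pos_eq; [reflexivity|].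
    apply Rmult_le_pos; [apply Rabs_pos|apply pow_le; lra]. }
  assert (Hu' : forall i j, Rabs (u i j) = u i j).
  { intros i j. apply Rabs_pos_eq, Rmult_le_pos; [apply Rabs_pos|apply pow_le; lra]. }
  assert (Hrow' : forall i, ex_series (fun j => Rabs (u i j)))
    by (intros i; refine (ex_series_ext _ _ _ (Hrow i)); intros j; now rewrite Hu').
  assert (Hsum' : ex_series (fun i => Series (fun j => Rabs (u i j)))).
  { refine (ex_series_ext _ _ _ Hsum). intros i. apply Series_ext. intros j. now rewrite Hu'. }
  split.
  - intros j. refine (ex_series_ext _ _ _ (ex_series_col_abs u Hrow' Hsum' j)). intros i. apply Hu.
  - refine (ex_series_ext _ _ _ (ex_series_cols_abs u Hrow' Hsum')). intros j. apply Series_ext. intros i. apply Hu.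
Qed.

Lemma DPSeries_dtranspose (a : dseq) (r x y : R) : abs_summable a r -> Rabs x <= r -> Rabs y <= r ->
  DPSeries (dtranspose a) y x = DPSeries a x y.
Proof.
  intros Ha Hx Hy.
  assert (Hrow : forall i, ex_series (fun j => Rabs (a i j * x ^ i * y ^ j)))
    by (intros i; now apply (ex_series_row_abs a r)).
  assert (Hsum : ex_series (fun i => Series (fun j => Rabs (a i j * x ^ i * y ^ j)))).
  { refine (ex_series_le_R _ _ _ (proj2 Ha)). intros i.
    rewrite Rabs_pos_eq by (apply Series_nonneg; [intros; apply Rabs_pos|apply Hrow]).
    apply Series_le_Series; [intros j; now apply dterm_le|apply Hrow|apply Ha]. }
  apply is_series_unique.
  refine (is_series_ext _ _ _ _ (is_series_Series_swap _ Hrow Hsum)). intros j.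
  apply Series_ext. intros i. unfold dtranspose. ring.
Qed.

Lemma has_dpseries_dtranspose (rho : R) (a : dseq) (F : R -> R -> R) :
  has_dpseries rho a F -> has_dpseries rho (dtranspose a) (fun x y => F y x).
Proof.
  intros [Ha HF]. split.
  - intros r Hr. apply abs_summable_dtranspose; [lra|now apply Ha].
  - intros x y Hxy. destruct (box_within_closed rho x y Hxy) as (m & Hm & Hx & Hy).
    rewrite HF by (destruct Hxy; split; assumption).
    symmetry. apply (DPSeries_dtranspose a m); [apply Ha|..]; assumption.
Qed.

Lemma locally_box_x (rho x y : R) : box rho x y -> locally x (fun s => box rho s y).
Proof.
  intros [Hx Hy]. apply Rabs_def2 in Hx.
  apply (locally_interval _ x (-rho) rho); simpl; try lra.
  intros s Hs1 Hs2. split; [apply Rabs_def1; lra|exact Hy].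
Qed.

Lemma locally_box_y (rho x y : R) : box rho x y -> locally y (fun s => box rho x s).
Proof.
  intros [Hx Hy]. apply Rabs_def2 in Hy.
  apply (locally_interval _ y (-rho) rho); simpl; try lra.
  intros s Hs1 Hs2. split; [exact Hx|apply Rabs_def1; lra].
Qed.

Lemma has_dpseries_ex_derive_x (rho : R) (a : dseq) (F : R -> R -> R) (x y : R) :
  has_dpseries rho a F -> box rho x y -> ex_derive (fun s => F s y) x.
Proof.
  intros [Ha HF] Hxy. destruct (box_within_closed rho x y Hxy) as (m & Hm & Hx & Hy).
  apply (ex_derive_ext_loc (PSeries (fun i => Series (fun j => a i j * y ^ j)))).
  - generalize (locally_box_x rho x y Hxy). apply filter_imp. intros s Hs.
    rewrite HF by exact Hs. symmetry. apply DPSeries_PSeries_x.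
  - apply ex_derive_PSeries, (Rbar_lt_le_trans _ ((m + rho) / 2)); [simpl; lra|].
    apply (CV_radius_rows_ge a); [apply Ha|..]; lra.
Qed.

Lemma has_dpseries_ex_derive_y (rho : R) (a : dseq) (F : R -> R -> R) (x y : R) :
  has_dpseries rho a F -> box rho x y -> ex_derive (fun s => F x s) y.
Proof.
  intros HF [Hx Hy].
  exact (has_dpseries_ex_derive_x rho _ (fun x y => F y x) y x (has_dpseries_dtranspose rho a F HF) (conj Hy Hx)).
Qed.

(** * Implicitly defined graphs *)

Fixpoint ddx (e : expr) : expr :=
  match e with
  | EX => ECst 1
  | EAdd e1 e2 => EAdd (ddx e1) (ddx e2)
  | EMul e1 e2 => EAdd (EMul (ddx e1) e2) (EMul e1 (ddx e2))
  | _ => ECst 0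
  end.

Fixpoint ddy (e : expr) : expr :=
  match e with
  | EY => ECst 1
  | EAdd e1 e2 => EAdd (ddy e1) (ddy e2)
  | EMul e1 e2 => EAdd (EMul (ddy e1) e2) (EMul e1 (ddy e2))
  | _ => ECst 0
  end.

Fixpoint ddt (e : expr) : expr :=
  match e with
  | ET => ECst 1
  | EAdd e1 e2 => EAdd (ddt e1) (ddt e2)
  | EMul e1 e2 => EAdd (EMul (ddt e1) e2) (EMul e1 (ddt e2))
  | _ => ECst 0
  end.

Fixpoint polynomial (e : expr) : Prop :=
  match e with
  | ELeaf _ _ _ => False
  | EAdd e1 e2 | EMul e1 e2 => polynomial e1 /\ polynomial e2
  | _ => True
  end.

Lemma polynomial_ddx (e : expr) : polynomial e -> polynomial (ddx e).
Proof. induction e; simpl; tauto. Qed.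

Lemma polynomial_ddy (e : expr) : polynomial e -> polynomial (ddy e).
Proof. induction e; simpl; tauto. Qed.

Lemma polynomial_ddt (e : expr) : polynomial e -> polynomial (ddt e).
Proof. induction e; simpl; tauto. Qed.

Lemma eval_ddx_ddy (e : expr) (x y t : R) : eval (ddx (ddy e)) x y t = eval (ddy (ddx e)) x y t.
Proof. induction e; simpl; try ring; rewrite ?IHe1, ?IHe2; ring. Qed.

Lemma eval_ddx_ddt (e : expr) (x y t : R) : eval (ddx (ddt e)) x y t = eval (ddt (ddx e)) x y t.
Proof. induction e; simpl; try ring; rewrite ?IHe1, ?IHe2; ring. Qed.

Lemma eval_ddy_ddt (e : expr) (x y t : R) : eval (ddy (ddt e)) x y t = eval (ddt (ddy e)) x y t.
Proof. induction e; simpl; try ring; rewrite ?IHe1, ?IHe2; ring. Qed.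

Lemma is_derive_eq_val (f : R -> R) (x l l' : R) : l = l' -> is_derive f x l -> is_derive f x l'.
Proof. now intros ->. Qed.

Lemma is_derive_eval (e : expr) (X Y T : R -> R) (s X' Y' T' : R) : polynomial e ->
  is_derive X s X' -> is_derive Y s Y' -> is_derive T s T' ->
  is_derive (fun s => eval e (X s) (Y s) (T s)) s
    (eval (ddx e) (X s) (Y s) (T s) * X' + eval (ddy e) (X s) (Y s) (T s) * Y'
     + eval (ddt e) (X s) (Y s) (T s) * T').
Proof.
  intros He HX HY HT. induction e as [c| | | | |e1 IH1 e2 IH2|e1 IH1 e2 IH2]; simpl in *.
  - refine (is_derive_eq_val _ _ _ _ _ (is_derive_const c s)). unfold zero; simpl. ring.
  - refine (is_derive_eq_val _ _ _ _ _ HX). ring.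
  - refine (is_derive_eq_val _ _ _ _ _ HY). ring.
  - refine (is_derive_eq_val _ _ _ _ _ HT). ring.
  - contradiction.
  - destruct He as [He1 He2].
    refine (is_derive_eq_val _ _ _ _ _ (is_derive_plus _ _ _ _ _ (IH1 He1) (IH2 He2))).
    unfold plus; simpl. ring.
  - destruct He as [He1 He2].
    refine (is_derive_eq_val _ _ _ _ _ (is_derive_mult _ _ _ _ _ (IH1 He1) (IH2 He2) _)).
    + unfold plus, mult; simpl. ring.
    + intros; unfold mult; simpl; ring.
Qed.

Definition gradient_form (P : expr) (x y t : R) : R :=
  eval (ddt P) x y t ^ 2 - eval (ddx P) x y t ^ 2 - eval (ddy P) x y t ^ 2.

(* [AF] of a graph [t = f(x,y)] on the level set [P = 0], times [- P_t ^ 5]. *)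
Definition zmc_form (P : expr) (x y t : R) : R :=
  let px := eval (ddx P) x y t in
  let py := eval (ddy P) x y t in
  let pt := eval (ddt P) x y t in
  let pxx := eval (ddx (ddx P)) x y t in
  let pxy := eval (ddy (ddx P)) x y t in
  let pxt := eval (ddt (ddx P)) x y t in
  let pyy := eval (ddy (ddy P)) x y t in
  let pyt := eval (ddt (ddy P)) x y t in
  let ptt := eval (ddt (ddt P)) x y t in
  (pt ^ 2 - px ^ 2) * (pyy * pt ^ 2 - 2 * pyt * py * pt + ptt * py ^ 2)
  + 2 * px * py * (pxy * pt ^ 2 - pxt * py * pt - pyt * px * pt + ptt * px * py)
  + (pt ^ 2 - py ^ 2) * (pxx * pt ^ 2 - 2 * pxt * px * pt + ptt * px ^ 2).

Lemma is_derive_locally_zero (g : R -> R) (x l : R) :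
  locally x (fun s => g s = 0) -> is_derive g x l -> l = 0.
Proof.
  intros Hg Hl. apply is_derive_unique in Hl. rewrite <- Hl.
  rewrite (Derive_ext_loc g (fun _ => 0)) by exact Hg. apply Derive_const.
Qed.

Section ImplicitGraph.

Variables (P : expr) (f : R -> R -> R) (r : R).
Hypotheses (HP : polynomial P)
  (Hzero : forall x y, box r x y -> eval P x y (f x y) = 0)
  (Hdx : forall x y, box r x y -> ex_derive (fun s => f s y) x)
  (Hdy : forall x y, box r x y -> ex_derive (fun s => f x s) y)
  (Hnz : forall x y, box r x y -> eval (ddt P) x y (f x y) <> 0).

Let slope (e : expr) (x y : R) : R := - eval e x y (f x y) / eval (ddt P) x y (f x y).

Lemma is_derive_implicit_x (x y : R) : box r x y -> is_derive (fun s => f s y) x (slope (ddx P) x y).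
Proof.
  intros Hxy. set (d := Derive (fun s => f s y) x).
  assert (Hd : is_derive (fun s => f s y) x d) by now apply Derive_correct, Hdx.
  pose proof (is_derive_eval P id (fun _ => y) (fun s => f s y) x 1 0 _ HP
    (is_derive_id x) (is_derive_const y x) Hd) as H.
  apply is_derive_locally_zero in H.
  - replace (slope (ddx P) x y) with d; [exact Hd|].
    unfold slope. field_simplify_eq; [|now apply Hnz]. unfold id in H. cbv beta in H. lra.
  - generalize (locally_box_x r x y Hxy). apply filter_imp. intros s Hs. now apply Hzero.
Qed.

Lemma is_derive_implicit_y (x y : R) : box r x y -> is_derive (fun s => f x s) y (slope (ddy P) x y).
Proof.
  intros Hxy. set (d := Derive (fun s => f x s) y).
  assert (Hd : is_derive (fun s => f x s) y d) by now apply Derive_correct, Hdy.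
  pose proof (is_derive_eval P (fun _ => x) id (fun s => f x s) y 0 1 _ HP
    (is_derive_const x y) (is_derive_id y) Hd) as H.
  apply is_derive_locally_zero in H.
  - replace (slope (ddy P) x y) with d; [exact Hd|].
    unfold slope. field_simplify_eq; [|now apply Hnz]. unfold id in H. cbv beta in H. lra.
  - generalize (locally_box_y r x y Hxy). apply filter_imp. intros s Hs. now apply Hzero.
Qed.

Lemma implicit_Dx (x y : R) : box r x y ->
  Dx f x y = - eval (ddx P) x y (f x y) / eval (ddt P) x y (f x y).
Proof. intros Hxy. exact (is_derive_unique _ _ _ (is_derive_implicit_x x y Hxy)). Qed.

Lemma implicit_Dy (x y : R) : box r x y ->
  Dy f x y = - eval (ddy P) x y (f x y) / eval (ddt P) x y (f x y).
Proof. intros Hxy. exact (is_derive_unique _ _ _ (is_derive_implicit_y x y Hxy)). Qed.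

Let along_x (e : expr) (x y : R) : R :=
  eval (ddx e) x y (f x y) + eval (ddt e) x y (f x y) * slope (ddx P) x y.
Let along_y (e : expr) (x y : R) : R :=
  eval (ddy e) x y (f x y) + eval (ddt e) x y (f x y) * slope (ddy P) x y.

Lemma is_derive_along_x (e : expr) (x y : R) : polynomial e -> box r x y ->
  is_derive (fun s => eval e s y (f s y)) x (along_x e x y).
Proof.
  intros He Hxy. refine (is_derive_eq_val _ _ _ _ _ (is_derive_eval e id (fun _ => y) (fun s => f s y) x 1 0 _ He
    (is_derive_id x) (is_derive_const y x) (is_derive_implicit_x x y Hxy))).
  unfold along_x, id. ring.
Qed.

Lemma is_derive_along_y (e : expr) (x y : R) : polynomial e -> box r x y ->
  is_derive (fun s => eval e x s (f x s)) y (along_y e x y).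
Proof.
  intros He Hxy. refine (is_derive_eq_val _ _ _ _ _ (is_derive_eval e (fun _ => x) id (fun s => f x s) y 0 1 _ He
    (is_derive_const x y) (is_derive_id y) (is_derive_implicit_y x y Hxy))).
  unfold along_y, id. ring.
Qed.

Let slope_deriv (e : expr) (de dt : R) (x y : R) : R :=
  - (de * eval (ddt P) x y (f x y) - eval e x y (f x y) * dt) / eval (ddt P) x y (f x y) ^ 2.

Lemma Dx_slope (e : expr) (x y : R) : polynomial e -> box r x y ->
  Dx (slope e) x y = slope_deriv e (along_x e x y) (along_x (ddt P) x y) x y.
Proof.
  intros He Hxy. apply is_derive_unique. unfold slope, slope_deriv.
  apply (is_derive_ext (fun s => - (eval e s y (f s y) / eval (ddt P) s y (f s y)))); [intros t; cbn; unfold Rdiv; ring|].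
  refine (is_derive_eq_val _ _ _ _ _ (is_derive_opp _ _ _ (is_derive_div _ _ _ _ _
    (is_derive_along_x e x y He Hxy) (is_derive_along_x (ddt P) x y (polynomial_ddt P HP) Hxy) (Hnz x y Hxy)))).
  unfold opp; simpl. unfold Rdiv. ring.
Qed.

Lemma Dy_slope (e : expr) (x y : R) : polynomial e -> box r x y ->
  Dy (slope e) x y = slope_deriv e (along_y e x y) (along_y (ddt P) x y) x y.
Proof.
  intros He Hxy. apply is_derive_unique. unfold slope, slope_deriv.
  apply (is_derive_ext (fun s => - (eval e x s (f x s) / eval (ddt P) x s (f x s)))); [intros t; cbn; unfold Rdiv; ring|].
  refine (is_derive_eq_val _ _ _ _ _ (is_derive_opp _ _ _ (is_derive_div _ _ _ _ _
    (is_derive_along_y e x y He Hxy) (is_derive_along_y (ddt P) x y (polynomial_ddt P HP) Hxy) (Hnz x y Hxy)))).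
  unfold opp; simpl. unfold Rdiv. ring.
Qed.

Lemma Dx_Dx_f (x y : R) : box r x y -> Dx (Dx f) x y = Dx (slope (ddx P)) x y.
Proof.
  intros Hxy. apply Derive_ext_loc. generalize (locally_box_x r x y Hxy). apply filter_imp.
  intros s Hs. exact (implicit_Dx s y Hs).
Qed.

Lemma Dx_Dy_f (x y : R) : box r x y -> Dx (Dy f) x y = Dx (slope (ddy P)) x y.
Proof.
  intros Hxy. apply Derive_ext_loc. generalize (locally_box_x r x y Hxy). apply filter_imp.
  intros s Hs. exact (implicit_Dy s y Hs).
Qed.

Lemma Dy_Dy_f (x y : R) : box r x y -> Dy (Dy f) x y = Dy (slope (ddy P)) x y.
Proof.
  intros Hxy. apply Derive_ext_loc. generalize (locally_box_y r x y Hxy). apply filter_imp.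
  intros s Hs. exact (implicit_Dy x s Hs).
Qed.

Lemma implicit_BF (x y : R) : box r x y ->
  BF f x y = gradient_form P x y (f x y) / eval (ddt P) x y (f x y) ^ 2.
Proof.
  intros Hxy. unfold BF, gradient_form. rewrite implicit_Dx, implicit_Dy by exact Hxy.
  field. now apply Hnz.
Qed.

Lemma implicit_AF (x y : R) : box r x y ->
  AF f x y = - zmc_form P x y (f x y) / eval (ddt P) x y (f x y) ^ 5.
Proof.
  intros Hxy. pose proof (Hnz x y Hxy) as Ht.
  unfold AF. rewrite Dx_Dx_f, Dx_Dy_f, Dy_Dy_f, implicit_Dx, implicit_Dy by exact Hxy.
  rewrite Dx_slope, Dx_slope, Dy_slope by (exact Hxy || now apply polynomial_ddx || now apply polynomial_ddy).
  unfold slope_deriv, along_x, along_y, slope, zmc_form.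
  rewrite !eval_ddx_ddy, !eval_ddx_ddt, !eval_ddy_ddt. field. exact Ht.
Qed.

End ImplicitGraph.

Definition analytic_implicit_graph (P : expr) (r : R) (f : R -> R -> R) : Prop :=
  polynomial P /\ (exists a, has_dpseries r a f) /\
  forall x y, box r x y -> eval P x y (f x y) = 0 /\ eval (ddt P) x y (f x y) <> 0.

Section AnalyticImplicitGraph.

Variables (P : expr) (r : R) (f : R -> R -> R).
Hypothesis Hf : analytic_implicit_graph P r f.

Lemma graph_ex_derive_x (x y : R) : box r x y -> ex_derive (fun s => f s y) x.
Proof. destruct Hf as (_ & [a Ha] & _). exact (has_dpseries_ex_derive_x r a f x y Ha). Qed.

Lemma graph_ex_derive_y (x y : R) : box r x y -> ex_derive (fun s => f x s) y.
Proof. destruct Hf as (_ & [a Ha] & _). exact (has_dpseries_ex_derive_y r a f x y Ha). Qed.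

Lemma graph_Dx (x y : R) : box r x y ->
  Dx f x y = - eval (ddx P) x y (f x y) / eval (ddt P) x y (f x y).
Proof.
  destruct Hf as (HP & _ & Heq).
  apply implicit_Dx; auto using graph_ex_derive_x; intros; now apply Heq.
Qed.

Lemma graph_Dy (x y : R) : box r x y ->
  Dy f x y = - eval (ddy P) x y (f x y) / eval (ddt P) x y (f x y).
Proof.
  destruct Hf as (HP & _ & Heq).
  apply implicit_Dy; auto using graph_ex_derive_y; intros; now apply Heq.
Qed.

Lemma graph_BF (x y : R) : box r x y ->
  BF f x y = gradient_form P x y (f x y) / eval (ddt P) x y (f x y) ^ 2.
Proof.
  destruct Hf as (HP & _ & Heq).
  apply implicit_BF; auto using graph_ex_derive_x, graph_ex_derive_y; intros; now apply Heq.
Qed.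

Lemma graph_AF (x y : R) : box r x y ->
  AF f x y = - zmc_form P x y (f x y) / eval (ddt P) x y (f x y) ^ 5.
Proof.
  destruct Hf as (HP & _ & Heq).
  apply implicit_AF; auto using graph_ex_derive_x, graph_ex_derive_y; intros; now apply Heq.
Qed.

End AnalyticImplicitGraph.

Lemma nonlightlike_dense_of_axis (f : R -> R -> R) (r : R) : 0 < r ->
  (forall x y, box r x y -> x <> 0 -> BF f x y <> 0) -> nonlightlike_dense f.
Proof.
  intros Hr HB. exists r. split; [exact Hr|]. intros x y Hxy eps Heps.
  destruct (Req_dec x 0) as [->|Hx].
  - assert (Hm : 0 < Rmin eps r) by (apply Rmin_glb_lt; lra).
    pose proof (Rmin_l eps r). pose proof (Rmin_r eps r).
    set (e := Rmin eps r / 2).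
    assert (He : 0 < e < eps /\ e < r) by (unfold e; lra).
    assert (Hey : box r e y) by (split; [rewrite Rabs_pos_eq|apply Hxy]; lra).
    exists e, y. rewrite Rminus_0_r, Rminus_diag, Rabs_R0, Rabs_pos_eq by lra.
    repeat split; try lra; try apply Hey. apply HB; [exact Hey|lra].
  - exists x, y. rewrite !Rminus_diag, Rabs_R0.
    repeat split; try apply Hxy; try lra. now apply HB.
Qed.

Lemma is_derive_0_of_quadratic_bound (g : R -> R) (r C : R) : 0 < r ->
  (forall s, Rabs s < r -> Rabs (g s) <= C * s ^ 2) -> is_derive g 0 0.
Proof.
  intros Hr Hg. apply is_derive_Reals. intros eps Heps.
  assert (Hg0 : g 0 = 0).
  { apply Rabs_eq_0. specialize (Hg 0 ltac:(rewrite Rabs_R0; lra)). pose proof (Rabs_pos (g 0)).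
    simpl in Hg. lra. }
  pose proof (Rabs_pos C) as HC.
  assert (Hd : 0 < Rmin r (eps / (Rabs C + 1))) by (apply Rmin_glb_lt; [|apply Rdiv_lt_0_compat]; lra).
  exists (mkposreal _ Hd). intros h Hh0 Hh. simpl in Hh.
  pose proof (Rmin_l r (eps / (Rabs C + 1))). pose proof (Rmin_r r (eps / (Rabs C + 1))).
  assert (Hpos : 0 < Rabs h) by now apply Rabs_pos_lt.
  assert (Hgh : Rabs (g h) <= Rabs C * Rabs h * Rabs h).
  { eapply Rle_trans; [apply Hg; lra|].
    replace (Rabs C * Rabs h * Rabs h) with (Rabs C * h ^ 2) by (rewrite <- (pow2_abs h); ring).
    apply Rmult_le_compat_r; [apply pow2_ge_0|apply Rle_abs]. }
  rewrite Rplus_0_l, Hg0, !Rminus_0_r, Rabs_div by exact Hh0.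
  apply (Rmult_lt_reg_r (Rabs h)); [exact Hpos|]. unfold Rdiv. rewrite Rmult_assoc, Rinv_l, Rmult_1_r by lra.
  apply Rle_lt_trans with (Rabs C * Rabs h * Rabs h); [exact Hgh|].
  apply Rmult_lt_compat_r; [exact Hpos|].
  apply Rle_lt_trans with (Rabs C * (eps / (Rabs C + 1))); [apply Rmult_le_compat_l; lra|].
  apply (Rmult_lt_reg_r (Rabs C + 1)); [lra|]. unfold Rdiv. field_simplify; lra.
Qed.

Lemma gradient_zero_of_bound (B : R -> R -> R) (r C : R) : 0 < r ->
  (forall x y, box r x y -> Rabs (B x y) <= C * x ^ 2) -> Dx B 0 0 = 0 /\ Dy B 0 0 = 0.
Proof.
  intros Hr HB.
  assert (Haxis : forall y, Rabs y < r -> B 0 y = 0).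
  { intros y Hy. assert (H0y : box r 0 y) by (split; [rewrite Rabs_R0; lra|exact Hy]).
    specialize (HB 0 y H0y). apply Rabs_eq_0. pose proof (Rabs_pos (B 0 y)). simpl in HB. lra. }
  split.
  - apply is_derive_unique, (is_derive_0_of_quadratic_bound _ r C Hr).
    intros s Hs. apply HB. split; [exact Hs|rewrite Rabs_R0; lra].
  - unfold Dy. rewrite (Derive_ext_loc _ (fun _ => 0)); [apply Derive_const|].
    apply (locally_interval _ 0 (- r) r); simpl; try lra.
    intros s Hs1 Hs2. apply Haxis. apply Rabs_def1; lra.
Qed.

Lemma box_origin (r : R) : 0 < r -> box r 0 0.
Proof. intros Hr. split; rewrite Rabs_R0; exact Hr. Qed.

Theorem Zomega_b_of_graph (P : expr) (r C : R) (f : R -> R -> R) :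
  0 < r -> analytic_implicit_graph P r f -> f 0 0 = 0 ->
  (forall x y t, eval P x y t = 0 -> zmc_form P x y t = 0) ->
  eval (ddx P) 0 0 0 = 0 -> eval (ddy P) 0 0 0 = - eval (ddt P) 0 0 0 ->
  (forall x y, box r x y -> Rabs (BF f x y) <= C * x ^ 2) ->
  (forall x y, box r x y -> x <> 0 -> BF f x y <> 0) ->
  Zomega_b f.
Proof.
  intros Hr Hf Hf0 Hzmc HPx HPy HBbound HBnz.
  pose proof (box_origin r Hr) as Ho.
  destruct (proj2 (proj2 Hf) 0 0 Ho) as [_ HPt]. rewrite Hf0 in HPt.
  split; [split; [|split; [|split]]|].
  - destruct Hf as (_ & [a Ha] & _). exact (has_dpseries_analytic0 r a f Hr Ha).
  - split; [exact Hf0|]. rewrite (graph_Dx P r f Hf 0 0 Ho), (graph_Dy P r f Hf 0 0 Ho), Hf0, HPx, HPy.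
    split; field; exact HPt.
  - exact (nonlightlike_dense_of_axis f r Hr HBnz).
  - exists r. split; [exact Hr|]. intros x y Hxy.
    rewrite (graph_AF P r f Hf x y Hxy), Hzmc by apply (proj2 (proj2 Hf) x y Hxy).
    unfold Rdiv. ring.
  - exact (gradient_zero_of_bound (BF f) r C Hr HBbound).
Qed.

(** * The three examples *)

Fixpoint EPow (e : expr) (n : nat) : expr :=
  match n with O => ECst 1 | S n => EMul e (EPow e n) end.

Definition ESub (e1 e2 : expr) : expr := EAdd e1 (EMul (ECst (-1)) e2).

Declare Scope expr_scope.
Delimit Scope expr_scope with E.
Infix "+" := EAdd : expr_scope.
Infix "-" := ESub : expr_scope.
Infix "*" := EMul : expr_scope.
Infix "^" := EPow : expr_scope.

(* Null coordinates [u = t - y], [v = t + y], in which the metric is [dx^2 - du dv]. *)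
Definition EU : expr := (ET - EY)%E.
Definition EV : expr := (ET + EY)%E.

Lemma Rabs_eval_le_majorant (e : expr) (x y t a b w : R) : polynomial e ->
  Rabs x <= a -> Rabs y <= b -> Rabs t <= w -> Rabs (eval e x y t) <= eval (majorant e) a b w.
Proof.
  intros He Hx Hy Ht. induction e; simpl in *; try lra; try tauto.
  - destruct He as [H1 H2]. eapply Rle_trans; [apply Rabs_triang|]. specialize (IHe1 H1). specialize (IHe2 H2). lra.
  - destruct He as [H1 H2]. rewrite Rabs_mult. apply Rmult_le_compat; auto; apply Rabs_pos.
Qed.

Ltac simpl_Rabs :=
  repeat match goal with
  | |- context [Rabs ?c] => first [rewrite (Rabs_pos_eq c) by lra | rewrite (Rabs_left c) by lra]
  end.

Lemma analytic1_const (c : R) : analytic1 (fun _ => c).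
Proof. exact (has_dpseries_analytic0 1 (dconst c) _ Rlt_0_1 (has_dpseries_const 1 c)). Qed.

Lemma characteristic_zero : characteristic (fun _ => 0) 0.
Proof. exists 1. split; [lra|]. intros y _. rewrite Derive_const. ring. Qed.

Definition f1 (x y : R) : R := y + 1 / 3 * x ^ 3.

Definition Phi1 : expr := (EU - ECst (1 / 3) * EX ^ 3)%E.

Lemma analytic_implicit_graph_f1 : analytic_implicit_graph Phi1 1 f1.
Proof.
  split; [simpl; tauto|]. split.
  - exists (eval_dseq (EY + ECst (1 / 3) * EX ^ 3)%E (dconst 0)).
    eapply has_dpseries_ext; [apply (has_dpseries_eval _ _ _ _ (has_dpseries_const 1 0)); simpl; tauto|].
    intros x y _. unfold f1. simpl. ring.
  - intros x y _. unfold f1. simpl. split; [ring|lra].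
Qed.

Lemma BF_f1 (x y : R) : box 1 x y -> BF f1 x y = - x ^ 4.
Proof.
  intros Hxy. rewrite (graph_BF _ _ _ analytic_implicit_graph_f1 x y Hxy).
  unfold gradient_form, f1. simpl. field.
Qed.

Lemma Zomega_b_f1 : Zomega_b f1.
Proof.
  apply (Zomega_b_of_graph Phi1 1 1 f1).
  - lra.
  - exact analytic_implicit_graph_f1.
  - unfold f1. ring.
  - intros x y t _. unfold zmc_form. simpl. ring.
  - simpl. ring.
  - simpl. ring.
  - intros x y Hxy. rewrite BF_f1 by exact Hxy. destruct Hxy as [Hx _]. apply Rabs_def2 in Hx.
    assert (Hx2 : 0 <= x ^ 2 <= 1) by nra.
    rewrite Rabs_Ropp, Rabs_pos_eq by nra. nra.
  - intros x y Hxy Hx. rewrite BF_f1 by exact Hxy. apply Ropp_neq_0_compat, pow_nonzero, Hx.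
Qed.

Theorem f1_example : Z0_I f1 /\ no_spacelike_part f1.
Proof.
  split; [split; [exact Zomega_b_f1|]|].
  - exists (fun _ => 0), (fun _ => 1), (fun _ _ => 0).
    split; [|split; [exact characteristic_zero|exists 1; split; [lra|reflexivity]]].
    split; [apply analytic1_const|]. split; [apply analytic1_const|].
    split; [exact (has_dpseries_analytic0 1 _ _ Rlt_0_1 (has_dpseries_const 1 0))|].
    exists 1. split; [lra|]. intros x y _. unfold f1. field.
  - exists 1. split; [lra|]. intros x y Hxy. rewrite BF_f1 by exact Hxy. nra.
Qed.

Definition Phi2 : expr :=
  (ECst 9 * EV ^ 3 * EU ^ 2 + (ECst 18 * EX ^ 2 * EV ^ 2 - ECst 3) * EU
   + ECst 16 * EX ^ 6 * EV ^ 3 - ECst 3 * EX ^ 4 * EV)%E.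

(* With [t = y + x^4 h], i.e. [u = x^4 h] and [v = 2 y + x^4 h], the equation
   [Phi2 = 0] becomes [h = T2(x, y, h)]. *)
Definition EV2 : expr := (ECst 2 * EY + EX ^ 4 * ET)%E.
Definition T2 : expr :=
  (ECst 3 * EX ^ 4 * EV2 ^ 3 * ET ^ 2 + ECst 6 * EX ^ 2 * EV2 ^ 2 * ET
   + ECst (16 / 3) * EX ^ 2 * EV2 ^ 3 - EV2)%E.

Definition rho2 : R := 1 / 100.
Definition tau2 : R := 1 / 20.

Definition h2 : R -> R -> R := DPSeries (fix_dseq T2).
Definition f2 (x y : R) : R := y + x ^ 4 * h2 x y.

Lemma fixpoint_hyps_T2 : contracting T2 /\ leaves_have_dpseries rho2 T2 /\ leaves_bounded rho2 T2 /\
  eval (majorant T2) rho2 rho2 tau2 <= tau2.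
Proof.
  split; [split; simpl; lia|]. split; [simpl; tauto|]. split; [simpl; tauto|].
  unfold rho2, tau2. simpl. simpl_Rabs. lra.
Qed.

Lemma has_dpseries_h2 : has_dpseries rho2 (fix_dseq T2) h2.
Proof.
  destruct fixpoint_hyps_T2 as (HT & Hl & Hb & Hm).
  apply has_dpseries_fix_dseq with tau2; auto; unfold rho2, tau2; lra.
Qed.

Lemma h2_eq (x y : R) : box rho2 x y -> h2 x y = eval T2 x y (h2 x y).
Proof.
  destruct fixpoint_hyps_T2 as (HT & Hl & Hb & Hm).
  apply DPSeries_fix_dseq_eq with tau2; auto; unfold rho2, tau2; lra.
Qed.

Lemma h2_bound (x y : R) : box rho2 x y -> Rabs (h2 x y) <= tau2.
Proof.
  destruct fixpoint_hyps_T2 as (HT & Hl & Hb & Hm). intros [Hx Hy].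
  apply DPSeries_fix_dseq_bound with rho2; auto; unfold rho2, tau2 in *; lra.
Qed.

Lemma Phi2_graph (x y h : R) : eval Phi2 x y (y + x ^ 4 * h) = 3 * x ^ 4 * (eval T2 x y h - h).
Proof. simpl. field. Qed.

(* The cofactor of [Phi2] in [zmc_form Phi2], found by polynomial division. *)
Definition lambda2 (x u v : R) : R :=
  - 648 * u * v - 1944 * u ^ 2 * v ^ 4 - 432 * x ^ 2 - 24624 * x ^ 2 * u * v ^ 3
  - 6264 * x ^ 4 * v ^ 2 + 103680 * x ^ 4 * u * v ^ 5 + 31104 * x ^ 6 * v ^ 4.

Lemma zmc_form_Phi2 (x y t : R) :
  zmc_form Phi2 x y t = eval (ddt Phi2) x y t ^ 2 * lambda2 x (t - y) (t + y) * eval Phi2 x y t.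
Proof. unfold zmc_form, lambda2. simpl. ring. Qed.

Definition EU2 : expr := (EX ^ 4 * ET)%E.

Definition Phi2_t_rest : expr :=
  (ECst 18 * EV2 ^ 3 * EU2 + ECst 18 * EX ^ 2 * EV2 ^ 2 + ECst 27 * EV2 ^ 2 * EU2 ^ 2
   + ECst 36 * EX ^ 2 * EV2 * EU2 + ECst 48 * EX ^ 6 * EV2 ^ 2 - ECst 3 * EX ^ 4)%E.

Lemma ddt_Phi2_graph (x y h : R) :
  eval (ddt Phi2) x y (y + x ^ 4 * h) = - 3 + eval Phi2_t_rest x y h.
Proof. simpl. ring. Qed.

(* In the null coordinates the gradient form is [4 Phi_u Phi_v - Phi_x ^ 2], with
   [Phi_u = -3 + a], [Phi_v = x^4 (-3 + b)] and [Phi_x = x^3 q] on the graph. *)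
Definition Ea2 : expr := (ECst 18 * EX ^ 4 * EV2 ^ 3 * ET + ECst 18 * EX ^ 2 * EV2 ^ 2)%E.
Definition Eb2 : expr :=
  (ECst 27 * EX ^ 4 * EV2 ^ 2 * ET ^ 2 + ECst 36 * EX ^ 2 * EV2 * ET + ECst 48 * EX ^ 2 * EV2 ^ 2)%E.
Definition Eq2 : expr := (ECst 36 * EX ^ 2 * EV2 ^ 2 * ET + ECst 96 * EX ^ 2 * EV2 ^ 3 - ECst 12 * EV2)%E.
Definition gradient_rest2 : expr :=
  (ECst 4 * Ea2 * Eb2 - ECst 12 * Ea2 - ECst 12 * Eb2 - EX ^ 2 * Eq2 ^ 2)%E.

Lemma gradient_form_Phi2_graph (x y h : R) :
  gradient_form Phi2 x y (y + x ^ 4 * h) = x ^ 4 * (36 + eval gradient_rest2 x y h).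
Proof. unfold gradient_form. simpl. ring. Qed.

Lemma Phi2_rests_small (x y : R) : box rho2 x y ->
  Rabs (eval Phi2_t_rest x y (h2 x y)) <= 1 /\ Rabs (eval gradient_rest2 x y (h2 x y)) <= 1.
Proof.
  intros Hxy. pose proof (h2_bound x y Hxy) as Hh. destruct Hxy as [Hx Hy].
  split; (eapply Rle_trans; [apply (Rabs_eval_le_majorant _ x y (h2 x y) rho2 rho2 tau2); [simpl; tauto|lra..]|]);
    unfold rho2, tau2; simpl; simpl_Rabs; lra.
Qed.

Lemma has_dpseries_f2 : has_dpseries rho2 (eval_dseq (EY + EX ^ 4 * ET)%E (fix_dseq T2)) f2.
Proof.
  eapply has_dpseries_ext; [apply (has_dpseries_eval _ _ _ _ has_dpseries_h2); simpl; tauto|].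
  intros x y _. unfold f2. simpl. ring.
Qed.

Lemma ddt_Phi2_f2 (x y : R) : box rho2 x y -> eval (ddt Phi2) x y (f2 x y) <= - 2.
Proof.
  intros Hxy. unfold f2. rewrite ddt_Phi2_graph.
  destruct (Phi2_rests_small x y Hxy) as [H _]. apply Rabs_le_between in H. lra.
Qed.

Lemma analytic_implicit_graph_f2 : analytic_implicit_graph Phi2 rho2 f2.
Proof.
  split; [simpl; tauto|]. split; [eexists; exact has_dpseries_f2|].
  intros x y Hxy. split.
  - unfold f2. rewrite Phi2_graph, <- h2_eq by exact Hxy. ring.
  - pose proof (ddt_Phi2_f2 x y Hxy). lra.
Qed.

Lemma BF_f2 (x y : R) : box rho2 x y ->
  BF f2 x y = x ^ 4 * (36 + eval gradient_rest2 x y (h2 x y)) / eval (ddt Phi2) x y (f2 x y) ^ 2.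
Proof.
  intros Hxy. rewrite (graph_BF _ _ _ analytic_implicit_graph_f2 x y Hxy).
  unfold f2 at 1. now rewrite gradient_form_Phi2_graph.
Qed.

Lemma BF_f2_bounds (x y : R) : box rho2 x y ->
  0 <= BF f2 x y <= 10 * x ^ 2 /\ (x <> 0 -> BF f2 x y <> 0).
Proof.
  intros Hxy. rewrite BF_f2 by exact Hxy.
  pose proof (ddt_Phi2_f2 x y Hxy) as Ht. destruct (Phi2_rests_small x y Hxy) as [_ HE].
  apply Rabs_le_between in HE. destruct Hxy as [Hx _]. unfold rho2 in Hx. apply Rabs_def2 in Hx.
  set (E := eval gradient_rest2 x y (h2 x y)) in *. set (p := eval (ddt Phi2) x y (f2 x y)) in *.
  assert (Hp : 4 <= p ^ 2) by nra.
  assert (Hx2 : 0 <= x ^ 2 <= 1) by nra.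
  split.
  - split; [apply Rdiv_le_0_compat; nra|].
    apply Rle_trans with (x ^ 4 * 37 / 4); [|nra].
    unfold Rdiv. apply Rmult_le_compat; try nra.
    + apply Rlt_le, Rinv_0_lt_compat. nra.
    + apply Rinv_le_contravar; lra.
  - intros Hx0. unfold Rdiv. apply Rmult_integral_contrapositive. split.
    + apply Rmult_integral_contrapositive. split; [now apply pow_nonzero|lra].
    + apply Rinv_neq_0_compat. nra.
Qed.

Lemma Zomega_b_f2 : Zomega_b f2.
Proof.
  apply (Zomega_b_of_graph Phi2 rho2 10 f2).
  - unfold rho2. lra.
  - exact analytic_implicit_graph_f2.
  - unfold f2. ring.
  - intros x y t Ht. rewrite zmc_form_Phi2, Ht. ring.
  - simpl. ring.
  - simpl. ring.
  - intros x y Hxy. destruct (BF_f2_bounds x y Hxy) as [HB _]. rewrite Rabs_pos_eq; lra.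
  - intros x y Hxy. apply (BF_f2_bounds x y Hxy).
Qed.

Theorem f2_example : Z0_I f2 /\ no_timelike_part f2.
Proof.
  split; [split; [exact Zomega_b_f2|]|].
  - exists (fun _ => 0), (fun _ => 0), h2.
    split; [|split; [exact characteristic_zero|exists 1; split; [lra|reflexivity]]].
    split; [apply analytic1_const|]. split; [apply analytic1_const|].
    split; [exact (has_dpseries_analytic0 rho2 _ _ ltac:(unfold rho2; lra) has_dpseries_h2)|].
    exists 1. split; [lra|]. intros x y _. unfold f2. field.
  - exists rho2. split; [unfold rho2; lra|]. intros x y Hxy. apply (BF_f2_bounds x y Hxy).
Qed.

Definition geom_dseq : dseq := fun i j => match i with O => (-1) ^ j | S _ => 0 end.

Definition alpha3 (y : R) : R := 1 / (y + 1).

Lemma is_series_geom_row (y : R) : Rabs y < 1 -> is_series (fun j => (-1) ^ j * y ^ j) (alpha3 y).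
Proof.
  intros Hy. replace (alpha3 y) with (/ (1 - - y)) by (unfold alpha3; field; apply Rabs_def2 in Hy; lra).
  refine (is_series_ext _ _ _ _ (is_series_geom (- y) _)); [|now rewrite Rabs_Ropp].
  intros j. simpl. rewrite <- Rpow_mult_distr. f_equal. ring.
Qed.

Lemma abs_summable_geom (r : R) : 0 <= r < 1 -> abs_summable geom_dseq r /\ dnorm geom_dseq r = / (1 - r).
Proof.
  intros Hr.
  assert (Hrow : forall i, is_series (fun j => Rabs (geom_dseq i j) * r ^ (i + j))
                                     (match i with O => / (1 - r) | S _ => 0 end)).
  { intros [|i].
    - refine (is_series_ext _ _ _ _ (is_series_geom r _)); [|rewrite Rabs_pos_eq; lra].
      intros j. simpl. rewrite pow_1_abs. ring.
    - replace 0 with (sum_f_R0 (fun j => Rabs (geom_dseq (S i) j) * r ^ (S i + j)) 0)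
        by (simpl; rewrite Rabs_R0; ring).
      apply is_series_finite. intros j _. simpl. rewrite Rabs_R0. ring. }
  assert (Hsum : is_series (fun i => Series (fun j => Rabs (geom_dseq i j) * r ^ (i + j))) (/ (1 - r))).
  { replace (/ (1 - r)) with (sum_f_R0 (fun i => Series (fun j => Rabs (geom_dseq i j) * r ^ (i + j))) 0)
      by (simpl; exact (is_series_unique _ _ (Hrow O))).
    apply is_series_finite. intros [|i] Hi; [lia|]. exact (is_series_unique _ _ (Hrow (S i))). }
  split; [split; [intros i; eexists; apply Hrow|eexists; exact Hsum]|].
  exact (is_series_unique _ _ Hsum).
Qed.

Lemma has_dpseries_geom (rho : R) : 0 < rho <= 1 -> has_dpseries rho geom_dseq (fun _ y => alpha3 y).
Proof.
  intros Hrho. split; [intros r Hr; apply abs_summable_geom; lra|].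
  intros x y [_ Hy]. symmetry. apply is_series_unique.
  replace (alpha3 y) with (sum_f_R0 (fun i => Series (fun j => geom_dseq i j * x ^ i * y ^ j)) 0).
  - apply is_series_finite. intros [|i] Hi; [lia|]. apply Series_zero. intros j. simpl. ring.
  - simpl. apply is_series_unique.
    refine (is_series_ext _ _ _ _ (is_series_geom_row y ltac:(lra))). intros j. simpl. ring.
Qed.

Definition Phi3 : expr := ((EU - ECst (1 / 3) * EX ^ 3) * (EV + ECst 2) - EX ^ 2)%E.

Definition rho3 : R := 1 / 10.
Definition tau3 : R := 1 / 20.

Definition EAlpha3 : expr := ELeaf geom_dseq (fun _ y => alpha3 y) (10 / 9).

(* The fixed point is [eta = h + alpha^3 / 8], so that [eta] vanishes at the origin. *)
Definition EH3 : expr := (ET - ECst (1 / 8) * EAlpha3 ^ 3)%E.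
Definition T3 : expr :=
  (ECst (- 1 / 2) * EAlpha3 * (ECst (1 / 6) * EX * EAlpha3 + EX ^ 2 * EAlpha3 * EH3
                               + ECst (1 / 3) * EX ^ 3 * EH3 + EX ^ 4 * EH3 * EH3))%E.

Definition eta3 : R -> R -> R := DPSeries (fix_dseq T3).
Definition h3 (x y : R) : R := eta3 x y - 1 / 8 * alpha3 y ^ 3.
Definition f3 (x y : R) : R := y + 1 / 2 * alpha3 y * x ^ 2 + 1 / 3 * x ^ 3 + x ^ 4 * h3 x y.

Lemma fixpoint_hyps_T3 : contracting T3 /\ leaves_have_dpseries rho3 T3 /\ leaves_bounded rho3 T3 /\
  eval (majorant T3) rho3 rho3 tau3 <= tau3.
Proof.
  assert (Hleaf : has_dpseries rho3 geom_dseq (fun _ y => alpha3 y)) by (apply has_dpseries_geom; unfold rho3; lra).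
  assert (Hbd : forall N, tnorm rho3 N geom_dseq <= 10 / 9).
  { intros N. destruct (abs_summable_geom rho3) as [Ha Hn]; [unfold rho3; lra|].
    eapply Rle_trans; [apply tnorm_le_dnorm; [unfold rho3; lra|exact Ha]|].
    rewrite Hn. unfold rho3. lra. }
  split; [split; simpl; lia|]. split; [simpl; tauto|]. split; [simpl; tauto|].
  unfold rho3, tau3. simpl. simpl_Rabs. lra.
Qed.

Lemma has_dpseries_eta3 : has_dpseries rho3 (fix_dseq T3) eta3.
Proof.
  destruct fixpoint_hyps_T3 as (HT & Hl & Hb & Hm).
  apply has_dpseries_fix_dseq with tau3; auto; unfold rho3, tau3; lra.
Qed.

Lemma eta3_eq (x y : R) : box rho3 x y -> eta3 x y = eval T3 x y (eta3 x y).
Proof.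
  destruct fixpoint_hyps_T3 as (HT & Hl & Hb & Hm).
  apply DPSeries_fix_dseq_eq with tau3; auto; unfold rho3, tau3; lra.
Qed.

Lemma eta3_bound (x y : R) : box rho3 x y -> Rabs (eta3 x y) <= tau3.
Proof.
  destruct fixpoint_hyps_T3 as (HT & Hl & Hb & Hm). intros [Hx Hy].
  apply DPSeries_fix_dseq_bound with rho3; auto; unfold rho3, tau3 in *; lra.
Qed.

Lemma leaves_have_dpseries_EAlpha3 : leaves_have_dpseries rho3 EAlpha3.
Proof. apply has_dpseries_geom. unfold rho3. lra. Qed.

Lemma has_dpseries_h3 : has_dpseries rho3 (eval_dseq EH3 (fix_dseq T3)) h3.
Proof.
  eapply has_dpseries_ext; [apply (has_dpseries_eval _ _ _ _ has_dpseries_eta3); simpl|].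
  - pose proof leaves_have_dpseries_EAlpha3. tauto.
  - intros x y _. unfold h3. simpl. ring.
Qed.

Lemma has_dpseries_f3 :
  has_dpseries rho3 (eval_dseq (EY + ECst (1 / 2) * EAlpha3 * EX ^ 2 + ECst (1 / 3) * EX ^ 3 + EX ^ 4 * EH3)%E
                               (fix_dseq T3)) f3.
Proof.
  eapply has_dpseries_ext; [apply (has_dpseries_eval _ _ _ _ has_dpseries_eta3); simpl|].
  - pose proof leaves_have_dpseries_EAlpha3. tauto.
  - intros x y _. unfold f3, h3. simpl. ring.
Qed.

Lemma Phi3_graph (x y e : R) : y + 1 <> 0 ->
  eval Phi3 x y (y + 1 / 2 * alpha3 y * x ^ 2 + 1 / 3 * x ^ 3 + x ^ 4 * (e - 1 / 8 * alpha3 y ^ 3))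
  = 2 * (y + 1) * x ^ 4 * (e - eval T3 x y e).
Proof. intros Hy. simpl. unfold alpha3. field. exact Hy. Qed.

Lemma ddt_Phi3 (x y t : R) : eval (ddt Phi3) x y t = 2 * t + 2 - 1 / 3 * x ^ 3.
Proof. simpl. field. Qed.

Lemma gradient_form_Phi3 (x y t : R) :
  gradient_form Phi3 x y t = 4 * eval Phi3 x y t - x ^ 3 * (t + y + 2) * (4 + x * (t + y + 2)).
Proof. unfold gradient_form. simpl. field. Qed.

Lemma zmc_form_Phi3 (x y t : R) :
  zmc_form Phi3 x y t = - 8 * eval (ddt Phi3) x y t ^ 2 * (2 + 2 * x + x * (t + y)) * eval Phi3 x y t.
Proof. unfold zmc_form. simpl. field. Qed.

Lemma alpha3_bounds (y : R) : Rabs y <= 1 / 10 -> 0 < alpha3 y <= 10 / 9.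
Proof.
  intros Hy. apply Rabs_le_between in Hy. unfold alpha3. split.
  - apply Rdiv_lt_0_compat; lra.
  - apply (Rmult_le_reg_r (y + 1)); [lra|]. unfold Rdiv. rewrite Rmult_assoc, Rinv_l by lra. lra.
Qed.

Lemma f3_bounds (x y : R) : box rho3 x y ->
  Rabs (f3 x y) <= 1 / 5 /\ 1 <= eval (ddt Phi3) x y (f3 x y).
Proof.
  intros Hxy. pose proof (eta3_bound x y Hxy) as He. destruct Hxy as [Hx Hy]. unfold rho3, tau3 in *.
  destruct (alpha3_bounds y) as [Ha1 Ha2]; [lra|].
  apply Rabs_le_between in He. apply Rabs_def2 in Hx. apply Rabs_def2 in Hy.
  set (a := alpha3 y) in *. set (e := eta3 x y) in *.
  assert (Ha3 : 0 <= a ^ 3 <= (10 / 9) ^ 3) by (split; [apply pow_le; lra|apply pow_incr; lra]).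
  assert (Hx2 : 0 <= x ^ 2 <= 1 / 100) by nra.
  assert (Hx3 : - (1 / 1000) <= x ^ 3 <= 1 / 1000) by nra.
  assert (Hx4 : 0 <= x ^ 4 <= 1 / 10000) by nra.
  assert (Hh : - (1 / 4) <= e - 1 / 8 * a ^ 3 <= 1 / 4) by lra.
  assert (Hf : Rabs (f3 x y) <= 1 / 5).
  { unfold f3, h3. fold a e. apply Rabs_le_between. nra. }
  split; [exact Hf|]. rewrite ddt_Phi3. apply Rabs_le_between in Hf. lra.
Qed.

Lemma analytic_implicit_graph_f3 : analytic_implicit_graph Phi3 rho3 f3.
Proof.
  split; [simpl; tauto|]. split; [eexists; exact has_dpseries_f3|].
  intros x y Hxy. split.
  - assert (Hy : y + 1 <> 0) by (destruct Hxy as [_ Hy]; unfold rho3 in Hy; apply Rabs_def2 in Hy; lra).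
    unfold f3, h3. rewrite Phi3_graph, <- eta3_eq by assumption. ring.
  - pose proof (f3_bounds x y Hxy). lra.
Qed.

Lemma BF_f3 (x y : R) : box rho3 x y ->
  BF f3 x y = - (x ^ 3 * (f3 x y + y + 2) * (4 + x * (f3 x y + y + 2))) / eval (ddt Phi3) x y (f3 x y) ^ 2.
Proof.
  intros Hxy. rewrite (graph_BF _ _ _ analytic_implicit_graph_f3 x y Hxy), gradient_form_Phi3.
  rewrite (proj1 (proj2 (proj2 analytic_implicit_graph_f3) x y Hxy)). unfold Rdiv. ring.
Qed.

Lemma BF_f3_bounds (x y : R) : box rho3 x y ->
  Rabs (BF f3 x y) <= 2 * x ^ 2 /\ (0 < x -> BF f3 x y < 0) /\ (x < 0 -> 0 < BF f3 x y).
Proof.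
  intros Hxy. rewrite BF_f3 by exact Hxy. destruct (f3_bounds x y Hxy) as [Hf Hp].
  destruct Hxy as [Hx Hy]. unfold rho3 in *. apply Rabs_le_between in Hf.
  apply Rabs_def2 in Hx. apply Rabs_def2 in Hy.
  set (w := f3 x y + y + 2) in *. set (p := eval (ddt Phi3) x y (f3 x y)) in *.
  assert (Hk : 0 < w * (4 + x * w) / p ^ 2 <= 15).
  { assert (Hw : 1 <= w <= 3) by (unfold w; lra).
    assert (Hn : 0 < w * (4 + x * w) < 15) by nra.
    split; [apply Rdiv_lt_0_compat; nra|].
    apply (Rmult_le_reg_r (p ^ 2)); [nra|]. unfold Rdiv. rewrite Rmult_assoc, Rinv_l by nra. nra. }
  replace (- (x ^ 3 * w * (4 + x * w)) / p ^ 2) with (- x ^ 3 * (w * (4 + x * w) / p ^ 2)) by (field; nra).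
  set (k := w * (4 + x * w) / p ^ 2) in *.
  split; [|split; intros Hs; replace (- x ^ 3 * k) with (- x * (x ^ 2 * k)) by ring;
                  assert (Hq : 0 < x ^ 2 * k) by (apply Rmult_lt_0_compat; [nra|lra]); nra].
  rewrite Rabs_mult, Rabs_Ropp, <- RPow_abs, (Rabs_pos_eq k) by lra.
  assert (Hax : Rabs x <= 1 / 10) by (apply Rabs_le_between; lra).
  rewrite <- (pow2_abs x). set (a := Rabs x) in *. pose proof (Rabs_pos x) as Ha.
  assert (Ha2 : 0 <= a ^ 2) by apply pow2_ge_0.
  assert (H15 : 0 <= a ^ 2 * k <= 15 * a ^ 2) by (split; nra).
  replace (a ^ 3 * k) with (a * (a ^ 2 * k)) by ring. nra.
Qed.

Lemma Zomega_b_f3 : Zomega_b f3.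
Proof.
  apply (Zomega_b_of_graph Phi3 rho3 2 f3).
  - unfold rho3. lra.
  - exact analytic_implicit_graph_f3.
  - unfold f3. ring.
  - intros x y t Ht. rewrite zmc_form_Phi3, Ht. ring.
  - simpl. ring.
  - simpl. ring.
  - intros x y Hxy. apply (BF_f3_bounds x y Hxy).
  - intros x y Hxy Hx. destruct (BF_f3_bounds x y Hxy) as (_ & Hpos & Hneg).
    destruct (Rdichotomy x 0 Hx); [specialize (Hneg H)|specialize (Hpos H)]; lra.
Qed.

Lemma characteristic_alpha3 : characteristic alpha3 0.
Proof.
  exists (1 / 2). split; [lra|]. intros y Hy. apply Rabs_def2 in Hy.
  assert (Hd : is_derive alpha3 y (- 1 / (y + 1) ^ 2)) by (unfold alpha3; auto_derive; [lra|field; lra]).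
  rewrite (is_derive_unique _ _ _ Hd). unfold alpha3. field. lra.
Qed.

Lemma changes_causal_type_f3 : changes_causal_type f3.
Proof.
  intros eps Heps.
  assert (Hm : 0 < Rmin eps rho3) by (apply Rmin_glb_lt; unfold rho3; lra).
  pose proof (Rmin_l eps rho3). pose proof (Rmin_r eps rho3).
  set (e := Rmin eps rho3 / 2) in *.
  assert (Hb : forall s, Rabs s = e -> box eps s 0 /\ box rho3 s 0)
    by (intros s Hs; unfold box; rewrite Hs, Rabs_R0; unfold e; lra).
  assert (He : Rabs e = e) by (apply Rabs_pos_eq; unfold e; lra).
  assert (He' : Rabs (- e) = e) by now rewrite Rabs_Ropp.
  split.
  - exists (- e), 0. split; [apply (Hb _ He')|].
    apply (BF_f3_bounds _ _ (proj2 (Hb _ He'))). unfold e. lra.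
  - exists e, 0. split; [apply (Hb _ He)|].
    apply (BF_f3_bounds _ _ (proj2 (Hb _ He))). unfold e. lra.
Qed.

Theorem f3_example : Z0_II f3 /\ changes_causal_type f3.
Proof.
  split; [split; [exact Zomega_b_f3|]|exact changes_causal_type_f3].
  exists alpha3, (fun _ => 1), h3.
  split; [|split; [exact characteristic_alpha3|]].
  - split; [exact (has_dpseries_analytic0 rho3 _ _ ltac:(unfold rho3; lra) leaves_have_dpseries_EAlpha3)|].
    split; [apply analytic1_const|].
    split; [exact (has_dpseries_analytic0 rho3 _ _ ltac:(unfold rho3; lra) has_dpseries_h3)|].
    exists 1. split; [lra|]. intros x y _. unfold f3. field.
  - exists 1. split; [lra|]. exists 1. split; [lra|]. reflexivity.
Qed.

Theorem corollary5p9 :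
  (exists f : R -> R -> R, Z0_I f /\ no_spacelike_part f) /\
  (exists f : R -> R -> R, Z0_I f /\ no_timelike_part f) /\
  (exists f : R -> R -> R, Z0_II f /\ changes_causal_type f).
Proof.
  split; [exists f1; exact f1_example|].
  split; [exists f2; exact f2_example|exists f3; exact f3_example].
Qed.
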